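(* Let $\mathcal{H}_A,\mathcal{H}_B$ be finite-dimensional Hilbert spaces, let $|\Psi\rangle,|\Phi\rangle\in\mathcal{H}_A\otimes\mathcal{H}_B$ be unit vectors (not necessarily orthogonal), and let $\alpha,\beta\in\mathbb{C}$ with $|\alpha|^2+|\beta|^2=1$ such that $|\Gamma\rangle=\alpha|\Psi\rangle+\beta|\Phi\rangle\neq 0$. Define $\rho^{AB}=|\alpha|^2|\Psi\rangle\langle\Psi|+|\beta|^2|\Phi\rangle\langle\Phi|$, $\rho^A=\mathrm{Tr}_B\rho^{AB}$, $\rho^B=\mathrm{Tr}_A\rho^{AB}$. Then $$\big\|\,|\Gamma\rangle\big\|^2\,E(\Gamma)\le 2\Big[|\alpha|^2E(\Psi)+|\beta|^2E(\Phi)+h_2(|\alpha|^2)-|S(\rho^A)-S(\rho^B)|\Big].$$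
   Context: $S(\rho)=-\mathrm{Tr}(\rho\log\rho)$ is the von Neumann entropy (logarithm base 2). For a nonzero vector $|\chi\rangle\in\mathcal{H}_A\otimes\mathcal{H}_B$, its entanglement is $E(\chi)=S\big(\mathrm{Tr}_B|\chi\rangle\langle\chi|/\langle\chi|\chi\rangle\big)$, i.e. the entropy of entanglement of the normalized vector. $h_2(x)=-x\log x-(1-x)\log(1-x)$ is the binary entropy function, with $0\log 0=0$. *)

From Stdlib Require Import Reals Lra ClassicalEpsilon.
Open Scope R_scope.

Record Cx := mkC { Re : R; Im : R }.
Definition C0 : Cx := mkC 0 0.
Definition RtoC (x : R) : Cx := mkC x 0.
Definition Cadd (z w : Cx) : Cx := mkC (Re z + Re w) (Im z + Im w).
Definition Cmul (z w : Cx) : Cx :=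
  mkC (Re z * Re w - Im z * Im w) (Re z * Im w + Im z * Re w).
Definition Cconj (z : Cx) : Cx := mkC (Re z) (- Im z).
Definition Cnorm2 (z : Cx) : R := Re z * Re z + Im z * Im z.

Fixpoint rsum (n : nat) (f : nat -> R) : R :=
  match n with O => 0 | S m => rsum m f + f m end.
Fixpoint csum (n : nat) (f : nat -> Cx) : Cx :=
  match n with O => C0 | S m => Cadd (csum m f) (f m) end.

Definition log2 (x : R) : R := ln x / ln 2.
Definition xlog2x (x : R) : R := if Req_EM_T x 0 then 0 else x * log2 x.
Definition h2 (x : R) : R := - xlog2x x - xlog2x (1 - x).

(* ---------- matrices (d x d, entries indexed by i,j < d) ---------- *)
Definition Mat := nat -> nat -> Cx.

Definition unitary (d : nat) (U : Mat) : Prop :=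
  forall i j, (i < d)%nat -> (j < d)%nat ->
    csum d (fun k => Cmul (U i k) (Cconj (U j k))) =
      (if Nat.eqb i j then RtoC 1 else C0).

Definition spectral_decomp (d : nat) (M : Mat) (U : Mat) (lam : nat -> R) : Prop :=
  unitary d U /\
  forall i j, (i < d)%nat -> (j < d)%nat ->
    M i j = csum d (fun k => Cmul (Cmul (U i k) (RtoC (lam k))) (Cconj (U j k))).

Definition vN_entropy (d : nat) (M : Mat) : R :=
  epsilon (inhabits 0%R) (fun s => exists U lam,
    spectral_decomp d M U lam /\ s = - rsum d (fun k => xlog2x (lam k))).

Definition BVec := nat -> nat -> Cx.   (* chi i j = coefficient of |i>|j> *)

Definition bnorm2 (dA dB : nat) (chi : BVec) : R :=
  rsum dA (fun i => rsum dB (fun j => Cnorm2 (chi i j))).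

Definition bcomb (a b : Cx) (psi phi : BVec) : BVec :=
  fun i j => Cadd (Cmul a (psi i j)) (Cmul b (phi i j)).

(* Tr_B |chi><chi| , a dA x dA matrix *)
Definition ptraceB (dB : nat) (chi : BVec) : Mat :=
  fun i i' => csum dB (fun j => Cmul (chi i j) (Cconj (chi i' j))).
(* Tr_A |chi><chi| , a dB x dB matrix *)
Definition ptraceA (dA : nat) (chi : BVec) : Mat :=
  fun j j' => csum dA (fun i => Cmul (chi i j) (Cconj (chi i j'))).

Definition Mscale (c : R) (M : Mat) : Mat := fun i j => Cmul (RtoC c) (M i j).
Definition Madd (M N : Mat) : Mat := fun i j => Cadd (M i j) (N i j).

Definition entanglement (dA dB : nat) (chi : BVec) : R :=
  vN_entropy dA (Mscale (/ bnorm2 dA dB chi) (ptraceB dB chi)).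

From Stdlib Require Import Reals Lra Lia Ring Field ClassicalEpsilon Classical.
Open Scope R_scope.

(* Put Gamma' := alpha Psi - beta Phi.  The parallelogram identity gives
   |Gamma><Gamma| + |Gamma'><Gamma'| = 2 rho^AB, hence
   rho^A = 1/2 Tr_B|Gamma><Gamma| + 1/2 Tr_B|Gamma'><Gamma'| and
   ||Gamma||^2 + ||Gamma'||^2 = 2.  Two entropy inequalities then suffice:
   - (lower bound)  if R = c X + Y with X, Y positive, tr X = 1, tr Y = 1 - c,
     then c S(X) <= S(R); with c = ||Gamma||^2/2 this gives
     ||Gamma||^2 E(Gamma) / 2 <= S(rho^A), and likewise <= S(rho^B);
   - (upper bound)  S(p M1 + q M2) <= p S(M1) + q S(M2) + h2(p) for density
     matrices M1, M2, applied to rho^A and rho^B;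
   together with the symmetry S(Tr_B |chi><chi|) = S(Tr_A |chi><chi|).
   Since min(S(rho^A), S(rho^B)) = max(...) - |S(rho^A) - S(rho^B)|, the
   theorem follows. *)

Lemma Cx_eq : forall z w : Cx, Re z = Re w -> Im z = Im w -> z = w.
Proof. intros [a b] [c d]; simpl; intros; subst; reflexivity. Qed.

Notation Cone := (RtoC 1).
Definition Copp (z : Cx) : Cx := mkC (- Re z) (- Im z).
Definition Csub (z w : Cx) : Cx := Cadd z (Copp w).

Lemma Cring_theory : ring_theory C0 Cone Cadd Cmul Csub Copp (@eq Cx).
Proof.
  constructor; intros; apply Cx_eq; unfold Csub, Copp, Cadd, Cmul, C0, Cone, RtoC;
  simpl; ring.
Qed.
Add Ring Cring : Cring_theory.

Lemma RtoC_mul a b : RtoC (a * b) = Cmul (RtoC a) (RtoC b).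
Proof. apply Cx_eq; simpl; ring. Qed.
Lemma RtoC_add a b : RtoC (a + b) = Cadd (RtoC a) (RtoC b).
Proof. apply Cx_eq; simpl; ring. Qed.
Lemma RtoC_opp a : RtoC (- a) = Copp (RtoC a).
Proof. apply Cx_eq; simpl; ring. Qed.
Lemma Re_RtoC r : Re (RtoC r) = r. Proof. reflexivity. Qed.
Lemma RtoC_inj a b : RtoC a = RtoC b -> a = b.
Proof. intros H. apply (f_equal Re) in H. exact H. Qed.

Lemma Cconj_add z w : Cconj (Cadd z w) = Cadd (Cconj z) (Cconj w).
Proof. apply Cx_eq; simpl; ring. Qed.
Lemma Cconj_mul z w : Cconj (Cmul z w) = Cmul (Cconj z) (Cconj w).
Proof. apply Cx_eq; simpl; ring. Qed.
Lemma Cconj_opp z : Cconj (Copp z) = Copp (Cconj z).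
Proof. apply Cx_eq; simpl; ring. Qed.
Lemma Cconj_conj z : Cconj (Cconj z) = z.
Proof. apply Cx_eq; simpl; ring. Qed.
Lemma Cconj_RtoC r : Cconj (RtoC r) = RtoC r.
Proof. apply Cx_eq; simpl; ring. Qed.
Lemma Cconj_C0 : Cconj C0 = C0.
Proof. apply Cx_eq; simpl; ring. Qed.

Lemma Cnorm2_eq z : Cmul (Cconj z) z = RtoC (Cnorm2 z).
Proof. apply Cx_eq; unfold Cnorm2; simpl; ring. Qed.
Lemma Cnorm2_eq' z : Cmul z (Cconj z) = RtoC (Cnorm2 z).
Proof. apply Cx_eq; unfold Cnorm2; simpl; ring. Qed.
Lemma Cnorm2_nonneg z : 0 <= Cnorm2 z.
Proof. unfold Cnorm2; nra. Qed.
Lemma Cnorm2_mul z w : Cnorm2 (Cmul z w) = Cnorm2 z * Cnorm2 w.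
Proof. unfold Cnorm2; simpl; ring. Qed.
Lemma Cnorm2_conj z : Cnorm2 (Cconj z) = Cnorm2 z.
Proof. unfold Cnorm2; simpl; ring. Qed.
Lemma Cnorm2_RtoC r : Cnorm2 (RtoC r) = r * r.
Proof. unfold Cnorm2; simpl; ring. Qed.
Lemma Cnorm2_zero z : Cnorm2 z = 0 -> z = C0.
Proof. unfold Cnorm2; destruct z as [a b]; simpl; intros; apply Cx_eq; simpl; nra. Qed.

Lemma Re_bound z w : 2 * Re (Cmul z w) <= Cnorm2 z + Cnorm2 w.
Proof.
  unfold Cnorm2; destruct z as [a b], w as [c d]; simpl.
  pose proof (pow2_ge_0 (a - c)); pose proof (pow2_ge_0 (b + d)). nra.
Qed.
Lemma Cnorm2_add_le z w : Cnorm2 (Cadd z w) <= 2 * Cnorm2 z + 2 * Cnorm2 w.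
Proof.
  unfold Cnorm2; destruct z as [a b], w as [c d]; simpl.
  pose proof (pow2_ge_0 (a - c)); pose proof (pow2_ge_0 (b - d)). nra.
Qed.

Lemma rsum_S n f : rsum (S n) f = rsum n f + f n. Proof. reflexivity. Qed.
Lemma csum_S n f : csum (S n) f = Cadd (csum n f) (f n). Proof. reflexivity. Qed.

Lemma rsum_ext n f g : (forall k, (k < n)%nat -> f k = g k) -> rsum n f = rsum n g.
Proof.
  induction n; simpl; intros; auto.
  rewrite IHn by (intros; apply H; lia). rewrite H by lia; auto.
Qed.
Lemma csum_ext n f g : (forall k, (k < n)%nat -> f k = g k) -> csum n f = csum n g.
Proof.
  induction n; simpl; intros; auto.
  rewrite IHn by (intros; apply H; lia). rewrite H by lia; auto.
Qed.
Lemma rsum_add n f g : rsum n (fun k => f k + g k) = rsum n f + rsum n g.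
Proof. induction n; simpl; [ring|rewrite IHn; ring]. Qed.
Lemma csum_add n f g : csum n (fun k => Cadd (f k) (g k)) = Cadd (csum n f) (csum n g).
Proof. induction n; simpl. apply Cx_eq; simpl; ring. rewrite IHn; ring. Qed.
Lemma rsum_scal n c f : rsum n (fun k => c * f k) = c * rsum n f.
Proof. induction n; simpl; [ring|rewrite IHn; ring]. Qed.
Lemma csum_scal n c f : csum n (fun k => Cmul c (f k)) = Cmul c (csum n f).
Proof. induction n; simpl. apply Cx_eq; simpl; ring. rewrite IHn; ring. Qed.
Lemma csum_scal_r n c f : csum n (fun k => Cmul (f k) c) = Cmul (csum n f) c.
Proof. induction n; simpl. apply Cx_eq; simpl; ring. rewrite IHn; ring. Qed.
Lemma rsum_opp n f : rsum n (fun k => - f k) = - rsum n f.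
Proof. induction n; simpl; [ring|rewrite IHn; ring]. Qed.
Lemma csum_opp n f : csum n (fun k => Copp (f k)) = Copp (csum n f).
Proof. induction n; simpl. apply Cx_eq; simpl; ring. rewrite IHn; ring. Qed.
Lemma rsum_0 n : rsum n (fun _ => 0) = 0.
Proof. induction n; simpl; [ring|rewrite IHn; ring]. Qed.
Lemma csum_0 n : csum n (fun _ => C0) = C0.
Proof. induction n; simpl; [reflexivity|rewrite IHn; ring]. Qed.
Lemma rsum_const1 n : rsum n (fun _ => 1) = INR n.
Proof. induction n; simpl; auto. rewrite IHn. destruct n; simpl; lra. Qed.

Lemma rsum_swap n m f :
  rsum n (fun i => rsum m (fun j => f i j)) = rsum m (fun j => rsum n (fun i => f i j)).
Proof. induction n; simpl. rewrite rsum_0; auto. rewrite IHn, <- rsum_add. auto. Qed.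
Lemma csum_swap n m f :
  csum n (fun i => csum m (fun j => f i j)) = csum m (fun j => csum n (fun i => f i j)).
Proof. induction n; simpl. rewrite csum_0; auto. rewrite IHn, <- csum_add. auto. Qed.
Lemma csum_swap_3 n m p f :
  csum n (fun i => csum m (fun j => csum p (fun k => f i j k))) =
  csum p (fun k => csum n (fun i => csum m (fun j => f i j k))).
Proof.
  transitivity (csum n (fun i => csum p (fun k => csum m (fun j => f i j k)))).
  apply csum_ext; intros; apply csum_swap. apply csum_swap.
Qed.
Lemma csum_mul n m f g :
  Cmul (csum n f) (csum m g) = csum n (fun i => csum m (fun j => Cmul (f i) (g j))).
Proof. rewrite <- csum_scal_r. apply csum_ext; intros. rewrite <- csum_scal. auto. Qed.
Lemma rsum_split a b f : rsum (a + b) f = rsum a f + rsum b (fun k => f (a + k)%nat).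
Proof.
  induction b; simpl. rewrite Nat.add_0_r; ring.
  rewrite Nat.add_succ_r; simpl. rewrite IHb; ring.
Qed.
Lemma csum_split a b f : csum (a + b) f = Cadd (csum a f) (csum b (fun k => f (a + k)%nat)).
Proof.
  induction b; simpl. rewrite Nat.add_0_r; ring.
  rewrite Nat.add_succ_r; simpl. rewrite IHb; ring.
Qed.

Lemma Re_csum n f : Re (csum n f) = rsum n (fun k => Re (f k)).
Proof. induction n; simpl; auto. rewrite <- IHn; auto. Qed.
Lemma csum_conj n f : Cconj (csum n f) = csum n (fun k => Cconj (f k)).
Proof. induction n; simpl. apply Cx_eq; simpl; ring. rewrite Cconj_add, IHn; auto. Qed.
Lemma csum_RtoC n f : csum n (fun k => RtoC (f k)) = RtoC (rsum n f).
Proof. induction n; simpl; auto. rewrite IHn, RtoC_add; auto. Qed.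
Lemma rsum_Cnorm2 n f :
  RtoC (rsum n (fun k => Cnorm2 (f k))) = csum n (fun k => Cmul (Cconj (f k)) (f k)).
Proof. rewrite <- csum_RtoC. apply csum_ext; intros. rewrite Cnorm2_eq; auto. Qed.

Lemma rsum_nonneg n f : (forall k, (k < n)%nat -> 0 <= f k) -> 0 <= rsum n f.
Proof.
  induction n; simpl; intros; [lra|].
  assert (0 <= f n) by (apply H; lia).
  assert (0 <= rsum n f) by (apply IHn; intros; apply H; lia). lra.
Qed.
Lemma rsum_le n f g : (forall k, (k < n)%nat -> f k <= g k) -> rsum n f <= rsum n g.
Proof.
  induction n; simpl; intros; [lra|].
  assert (f n <= g n) by (apply H; lia).
  assert (rsum n f <= rsum n g) by (apply IHn; intros; apply H; lia). lra.
Qed.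
Lemma rsum_abs_le n f : Rabs (rsum n f) <= rsum n (fun i => Rabs (f i)).
Proof.
  induction n; simpl. rewrite Rabs_R0; lra.
  eapply Rle_trans. apply Rabs_triang. lra.
Qed.
Lemma rsum_term_le n f k :
  (forall k, (k < n)%nat -> 0 <= f k) -> (k < n)%nat -> f k <= rsum n f.
Proof.
  induction n; simpl; intros; [lia|].
  assert (0 <= rsum n f) by (apply rsum_nonneg; intros; apply H; lia).
  destruct (Nat.eq_dec k n). subst. lra.
  assert (f k <= rsum n f) by (apply IHn; [intros; apply H; lia|lia]).
  assert (0 <= f n) by (apply H; lia). lra.
Qed.
Lemma rsum_zero_nonneg n f : (forall k, (k < n)%nat -> 0 <= f k) -> rsum n f = 0 ->
  forall k, (k < n)%nat -> f k = 0.
Proof.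
  intros. assert (f k <= rsum n f) by (apply rsum_term_le; auto).
  assert (0 <= f k) by auto. lra.
Qed.
Lemma rsum_pos_exists n f : (forall k, (k < n)%nat -> 0 <= f k) -> 0 < rsum n f ->
  exists k, (k < n)%nat /\ 0 < f k.
Proof.
  intros. destruct (classic (exists k, (k < n)%nat /\ 0 < f k)); auto.
  exfalso. assert (rsum n f <= rsum n (fun _ => 0)).
  { apply rsum_le. intros. destruct (Rlt_le_dec 0 (f k)); auto. exfalso; eauto. }
  rewrite rsum_0 in H2; lra.
Qed.
Lemma Cnorm2_csum_le n f : Cnorm2 (csum n f) <= 2 ^ n * rsum n (fun k => Cnorm2 (f k)).
Proof.
  induction n; simpl. unfold Cnorm2; simpl; lra.
  eapply Rle_trans. apply Cnorm2_add_le.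
  assert (0 <= rsum n (fun k => Cnorm2 (f k)))
    by (apply rsum_nonneg; intros; apply Cnorm2_nonneg).
  assert (1 <= 2 ^ n) by (apply pow_R1_Rle; lra).
  pose proof (Cnorm2_nonneg (f n)). nra.
Qed.

Definition delta (i j : nat) : Cx := if Nat.eqb i j then Cone else C0.

Lemma delta_sym i j : delta i j = delta j i.
Proof. unfold delta; rewrite Nat.eqb_sym; auto. Qed.
Lemma delta_refl i : delta i i = Cone.
Proof. unfold delta; rewrite Nat.eqb_refl; auto. Qed.
Lemma csum_delta_l n j f : (j < n)%nat -> csum n (fun k => Cmul (delta k j) (f k)) = f j.
Proof.
  induction n; simpl; intros; [lia|]. unfold delta in *.
  destruct (Nat.eq_dec j n).
  - subst. rewrite Nat.eqb_refl. rewrite (csum_ext n _ (fun _ => C0)).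
    rewrite csum_0. ring.
    intros. destruct (Nat.eqb_spec k n); [lia|]. ring.
  - rewrite IHn by lia. destruct (Nat.eqb_spec n j); [lia|]. ring.
Qed.
Lemma csum_delta_r n j f : (j < n)%nat -> csum n (fun k => Cmul (delta j k) (f k)) = f j.
Proof.
  intros. rewrite <- (csum_delta_l n j f) by auto. apply csum_ext; intros.
  rewrite delta_sym; auto.
Qed.

Definition vnorm2 n (x : nat -> Cx) : R := rsum n (fun i => Cnorm2 (x i)).
Definition ip n (x y : nat -> Cx) : Cx := csum n (fun i => Cmul (Cconj (x i)) (y i)).
Definition mv n (M : Mat) (x : nat -> Cx) : nat -> Cx :=
  fun i => csum n (fun j => Cmul (M i j) (x j)).
Definition mm n (A B : Mat) : Mat := fun i j => csum n (fun k => Cmul (A i k) (B k j)).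
Definition quad n M x : R := Re (ip n x (mv n M x)).
Definition herm n (M : Mat) : Prop :=
  forall i j, (i < n)%nat -> (j < n)%nat -> M j i = Cconj (M i j).
Definition psd n (M : Mat) : Prop := forall x, 0 <= quad n M x.
Definition col (U : Mat) k : nat -> Cx := fun i => U i k.
Definition ev (i : nat) : nat -> Cx := fun j => delta j i.
Definition Id : Mat := fun i j => delta i j.
Definition trace n (M : Mat) : R := rsum n (fun i => Re (M i i)).

Lemma vnorm2_nonneg n x : 0 <= vnorm2 n x.
Proof. apply rsum_nonneg; intros; apply Cnorm2_nonneg. Qed.
Lemma vnorm2_ip n x : RtoC (vnorm2 n x) = ip n x x.
Proof. unfold vnorm2, ip. apply rsum_Cnorm2. Qed.
Lemma vnorm2_ext n x y : (forall i, (i < n)%nat -> x i = y i) -> vnorm2 n x = vnorm2 n y.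
Proof. intros; unfold vnorm2; apply rsum_ext; intros; rewrite H; auto. Qed.
Lemma vnorm2_zero n x : vnorm2 n x = 0 -> forall i, (i < n)%nat -> x i = C0.
Proof.
  intros. apply Cnorm2_zero. apply (rsum_zero_nonneg n (fun i => Cnorm2 (x i))); auto.
  intros; apply Cnorm2_nonneg.
Qed.
Lemma vnorm2_term n x i : (i < n)%nat -> Cnorm2 (x i) <= vnorm2 n x.
Proof.
  intros. apply (rsum_term_le n (fun i => Cnorm2 (x i))); auto.
  intros; apply Cnorm2_nonneg.
Qed.
Lemma vnorm2_ev n i : (i < n)%nat -> vnorm2 n (ev i) = 1.
Proof.
  intros. apply RtoC_inj. rewrite vnorm2_ip. unfold ip, ev.
  rewrite (csum_ext n _ (fun k => Cmul (delta k i) Cone)). rewrite csum_delta_l; auto.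
  intros. unfold delta. destruct (Nat.eqb k i); apply Cx_eq; simpl; ring.
Qed.

Lemma ip_conj n x y : Cconj (ip n x y) = ip n y x.
Proof.
  unfold ip. rewrite csum_conj. apply csum_ext; intros.
  rewrite Cconj_mul, Cconj_conj; ring.
Qed.
Lemma ip_ext n x y x' y' : (forall i, (i < n)%nat -> x i = x' i) ->
  (forall i, (i < n)%nat -> y i = y' i) -> ip n x y = ip n x' y'.
Proof. intros; unfold ip; apply csum_ext; intros; rewrite H, H0; auto. Qed.
Lemma ip_add_r n x y z : ip n x (fun i => Cadd (y i) (z i)) = Cadd (ip n x y) (ip n x z).
Proof. unfold ip. rewrite <- csum_add. apply csum_ext; intros; ring. Qed.
Lemma ip_opp_r n x y : ip n x (fun i => Copp (y i)) = Copp (ip n x y).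
Proof. unfold ip. rewrite <- csum_opp. apply csum_ext; intros; ring. Qed.
Lemma ip_scal_r n x y c : ip n x (fun i => Cmul (y i) c) = Cmul (ip n x y) c.
Proof. unfold ip. rewrite <- csum_scal_r. apply csum_ext; intros; ring. Qed.
Lemma ip_scal_l n x y c : ip n (fun i => Cmul (x i) c) y = Cmul (Cconj c) (ip n x y).
Proof. unfold ip. rewrite <- csum_scal. apply csum_ext; intros. rewrite Cconj_mul; ring. Qed.
Lemma ip_sum_r n r x (F : nat -> nat -> Cx) c :
  ip n x (fun i => csum r (fun a => Cmul (F a i) (c a))) =
  csum r (fun a => Cmul (ip n x (F a)) (c a)).
Proof.
  unfold ip.
  rewrite (csum_ext n _ (fun i => csum r (fun a => Cmul (Cmul (Cconj (x i)) (F a i)) (c a)))).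
  rewrite csum_swap. apply csum_ext; intros. rewrite csum_scal_r; auto.
  intros. rewrite <- csum_scal. apply csum_ext; intros; ring.
Qed.
Lemma ip_sum_l n r (F : nat -> nat -> Cx) c y :
  ip n (fun i => csum r (fun a => Cmul (F a i) (c a))) y =
  csum r (fun a => Cmul (Cconj (c a)) (ip n (F a) y)).
Proof.
  rewrite <- ip_conj, ip_sum_r, csum_conj. apply csum_ext; intros.
  rewrite Cconj_mul, ip_conj. ring.
Qed.
Lemma ip_ev n y i : (i < n)%nat -> ip n y (ev i) = Cconj (y i).
Proof.
  intros. unfold ip, ev. rewrite (csum_ext n _ (fun k => Cmul (delta k i) (Cconj (y k)))).
  apply csum_delta_l; auto. intros; ring.
Qed.
Lemma vnorm2_sub n u z :
  vnorm2 n (fun i => Cadd (u i) (Copp (z i))) = vnorm2 n u - 2 * Re (ip n u z) + vnorm2 n z.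
Proof.
  apply RtoC_inj. rewrite vnorm2_ip. unfold ip.
  rewrite (csum_ext n _ (fun i => Cadd (Cadd (Cmul (Cconj (u i)) (u i))
      (Copp (Cadd (Cmul (Cconj (u i)) (z i)) (Cconj (Cmul (Cconj (u i)) (z i))))))
      (Cmul (Cconj (z i)) (z i)))).
  2:{ intros. rewrite Cconj_add, Cconj_opp, Cconj_mul, Cconj_conj. ring. }
  rewrite !csum_add, csum_opp, csum_add, <- csum_conj.
  fold (ip n u u) (ip n z z) (ip n u z). rewrite <- !vnorm2_ip.
  generalize (ip n u z) as w. intros [a b]. apply Cx_eq; simpl; ring.
Qed.

Lemma mv_ext n M x y : (forall i, (i < n)%nat -> x i = y i) ->
  forall i, mv n M x i = mv n M y i.
Proof. intros; unfold mv; apply csum_ext; intros; rewrite H; auto. Qed.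
Lemma mv_scal n M x c i : mv n M (fun j => Cmul (x j) c) i = Cmul (mv n M x i) c.
Proof. unfold mv. rewrite <- csum_scal_r. apply csum_ext; intros; ring. Qed.
Lemma mv_Id n x i : (i < n)%nat -> mv n Id x i = x i.
Proof. intros; unfold mv, Id. apply csum_delta_r; auto. Qed.
Lemma mv_mm n A B x i : mv n (mm n A B) x i = mv n A (mv n B x) i.
Proof.
  unfold mv, mm. rewrite (csum_ext n _ (fun j => csum n (fun k => Cmul (A i k) (Cmul (B k j) (x j))))).
  rewrite csum_swap. apply csum_ext; intros. rewrite <- csum_scal. auto.
  intros. rewrite <- csum_scal_r. apply csum_ext; intros; ring.
Qed.
Lemma ip_herm n A x y : herm n A -> ip n (mv n A x) y = ip n x (mv n A y).
Proof.
  intros H. unfold ip, mv.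
  rewrite (csum_ext n _ (fun i => csum n (fun j => Cmul (Cmul (Cconj (x j)) (A j i)) (y i)))).
  rewrite csum_swap. apply csum_ext; intros. rewrite <- csum_scal. apply csum_ext; intros; ring.
  intros i Hi. rewrite csum_conj, <- csum_scal_r. apply csum_ext; intros j Hj.
  rewrite Cconj_mul, (H j i), Cconj_conj by auto. ring.
Qed.

Lemma quad_sum n A x :
  quad n A x = rsum n (fun i => rsum n (fun j => Re (Cmul (Cmul (Cconj (x i)) (A i j)) (x j)))).
Proof.
  unfold quad, ip, mv. rewrite Re_csum. apply rsum_ext; intros. rewrite <- csum_scal, Re_csum.
  apply rsum_ext; intros. f_equal; ring.
Qed.
Lemma quad_ext n M x y : (forall i, (i < n)%nat -> x i = y i) -> quad n M x = quad n M y.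
Proof.
  intros; unfold quad; f_equal. apply ip_ext; auto. intros; apply mv_ext; auto.
Qed.
Lemma quad_mat_ext n A B x : (forall i j, (i < n)%nat -> (j < n)%nat -> A i j = B i j) ->
  quad n A x = quad n B x.
Proof. intros. rewrite !quad_sum. apply rsum_ext; intros. apply rsum_ext; intros. rewrite H; auto. Qed.
Lemma quad_zero n M : quad n M (fun _ => C0) = 0.
Proof.
  unfold quad, ip. rewrite (csum_ext n _ (fun _ => C0)) by (intros; rewrite Cconj_C0; ring).
  rewrite csum_0; reflexivity.
Qed.
Lemma quad_zero_vec n A x : vnorm2 n x = 0 -> quad n A x = 0.
Proof. intros. rewrite (quad_ext n A x (fun _ => C0)). apply quad_zero. apply vnorm2_zero; auto. Qed.
Lemma quad_Id n x : quad n Id x = vnorm2 n x.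
Proof.
  unfold quad, vnorm2. rewrite <- (Re_RtoC (rsum n _)). rewrite rsum_Cnorm2. f_equal.
  unfold ip, mv. apply csum_ext; intros. f_equal. apply csum_delta_r; auto.
Qed.

Lemma herm_ext n M M' : (forall i j, (i < n)%nat -> (j < n)%nat -> M i j = M' i j) ->
  herm n M -> herm n M'.
Proof. intros H Hh i j Hi Hj. rewrite <- !H by auto. auto. Qed.
Lemma psd_ext n M M' : (forall i j, (i < n)%nat -> (j < n)%nat -> M i j = M' i j) ->
  psd n M -> psd n M'.
Proof. intros H Hp x. rewrite <- (quad_mat_ext n M M' x H). auto. Qed.
Lemma herm_diag_real n N i : herm n N -> (i < n)%nat -> N i i = RtoC (Re (N i i)).
Proof.
  intros H Hi. pose proof (H i i Hi Hi). apply Cx_eq; simpl; auto.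
  destruct (N i i) as [a b]; simpl in *. injection H0; intros; lra.
Qed.
Lemma herm_Id n : herm n Id.
Proof.
  intros i j Hi Hj. unfold Id, delta.
  destruct (Nat.eqb_spec j i), (Nat.eqb_spec i j); try lia; apply Cx_eq; simpl; ring.
Qed.
Lemma herm_sandwich n P B : herm n P -> herm n B -> herm n (mm n P (mm n B P)).
Proof.
  intros HP HB i j Hi Hj. unfold mm. rewrite csum_conj.
  rewrite (csum_ext n (fun k => Cconj (Cmul (P i k) (csum n (fun k0 => Cmul (B k k0) (P k0 j)))))
     (fun k => csum n (fun l => Cmul (P j l) (Cmul (B l k) (P k i))))).
  rewrite csum_swap. apply csum_ext; intros. rewrite <- csum_scal. apply csum_ext; intros; ring.
  intros k Hk. rewrite Cconj_mul, csum_conj, <- csum_scal. apply csum_ext; intros l Hl.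
  rewrite Cconj_mul, <- (HP i k), <- (HB k l), <- (HP l j) by auto. ring.
Qed.

Definition comb (s : R) (A : Mat) (t : R) (B : Mat) : Mat :=
  fun i j => Cadd (Cmul (RtoC s) (A i j)) (Cmul (RtoC t) (B i j)).

Lemma mv_comb n s A t B x i :
  mv n (comb s A t B) x i = Cadd (Cmul (RtoC s) (mv n A x i)) (Cmul (RtoC t) (mv n B x i)).
Proof. unfold mv, comb. rewrite <- !csum_scal, <- csum_add. apply csum_ext; intros; ring. Qed.
Lemma herm_comb n s A t B : herm n A -> herm n B -> herm n (comb s A t B).
Proof.
  intros HA HB i j Hi Hj. unfold comb. rewrite HA, HB by auto.
  rewrite Cconj_add, !Cconj_mul, !Cconj_RtoC; auto.
Qed.
Lemma quad_comb n s A t B x : quad n (comb s A t B) x = s * quad n A x + t * quad n B x.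
Proof.
  rewrite !quad_sum. rewrite <- !rsum_scal, <- rsum_add. apply rsum_ext; intros i Hi.
  rewrite <- !rsum_scal, <- rsum_add. apply rsum_ext; intros j Hj. unfold comb.
  destruct (x i), (x j), (A i j), (B i j); simpl; ring.
Qed.

(* a crude operator-norm bound: |<x, A x>| <= mat_bound A ||x||^2 *)
Definition mat_bound n (A : Mat) : R := rsum n (fun i => rsum n (fun j => Cnorm2 (A i j) + 1)).

Lemma quad_term_bound a m b V : Cnorm2 a <= V -> Cnorm2 b <= V ->
  Rabs (Re (Cmul (Cmul (Cconj a) m) b)) <= (Cnorm2 m + 1) * V.
Proof.
  intros Ha Hb. pose proof (Re_bound (Cmul (Cconj a) m) b).
  pose proof (Re_bound (Copp (Cmul (Cconj a) m)) b).
  assert (E : Re (Cmul (Copp (Cmul (Cconj a) m)) b) = - Re (Cmul (Cmul (Cconj a) m) b))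
    by (simpl; ring).
  assert (E2 : Cnorm2 (Copp (Cmul (Cconj a) m)) = Cnorm2 a * Cnorm2 m)
    by (unfold Cnorm2; simpl; ring).
  rewrite E, E2 in H0. rewrite Cnorm2_mul, Cnorm2_conj in H.
  pose proof (Cnorm2_nonneg m). pose proof (Cnorm2_nonneg a).
  assert (Cnorm2 a * Cnorm2 m <= V * Cnorm2 m) by (apply Rmult_le_compat_r; auto).
  apply Rabs_le. split; nra.
Qed.
Lemma quad_bound n A x :
  - (mat_bound n A * vnorm2 n x) <= quad n A x <= mat_bound n A * vnorm2 n x.
Proof.
  assert (H : Rabs (quad n A x) <= mat_bound n A * vnorm2 n x).
  { rewrite quad_sum. unfold mat_bound. rewrite Rmult_comm, <- rsum_scal.
    eapply Rle_trans. apply rsum_abs_le. apply rsum_le; intros i Hi.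
    rewrite <- rsum_scal. eapply Rle_trans. apply rsum_abs_le. apply rsum_le; intros j Hj.
    rewrite Rmult_comm. apply quad_term_bound; apply vnorm2_term; auto. }
  revert H. unfold Rabs. destruct (Rcase_abs (quad n A x)); intros; lra.
Qed.

(* a Hermitian idempotent matrix of trace zero vanishes: its diagonal entries
   are the row norms sum_b |Q a b|^2, which add up to the trace *)
Lemma herm_idempotent_trace0 n Q : herm n Q ->
  (forall a c, (a < n)%nat -> (c < n)%nat -> csum n (fun b => Cmul (Q a b) (Q b c)) = Q a c) ->
  csum n (fun a => Q a a) = C0 ->
  forall a b, (a < n)%nat -> (b < n)%nat -> Q a b = C0.
Proof.
  intros Hh Hidem Htr.
  assert (Hrow : forall a, (a < n)%nat -> RtoC (rsum n (fun b => Cnorm2 (Q a b))) = Q a a).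
  { intros a Ha. rewrite <- Hidem by auto. rewrite rsum_Cnorm2. apply csum_ext; intros b Hb.
    rewrite (Hh a b) by auto; ring. }
  assert (Hs : rsum n (fun a => rsum n (fun b => Cnorm2 (Q a b))) = 0).
  { apply RtoC_inj. rewrite <- csum_RtoC, (csum_ext n _ (fun a => Q a a)); auto. }
  intros a b Ha Hb. apply Cnorm2_zero.
  pose proof (rsum_zero_nonneg n _
    (fun a _ => rsum_nonneg n _ (fun b _ => Cnorm2_nonneg (Q a b))) Hs a Ha) as H1.
  exact (rsum_zero_nonneg n (fun b => Cnorm2 (Q a b)) (fun b _ => Cnorm2_nonneg _) H1 b Hb).
Qed.

Lemma unitary_delta n U : unitary n U -> forall i j, (i < n)%nat -> (j < n)%nat ->
  csum n (fun k => Cmul (U i k) (Cconj (U j k))) = delta i j.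
Proof. intros H i j Hi Hj. rewrite H; auto. Qed.

(* for U U^* = I, the Gram matrix P a b = <u_a, u_b> of the columns of U is
   idempotent: P^2 = U^* (U U^* ) U = P *)
Lemma col_gram_idempotent n U : unitary n U -> forall a c, (a < n)%nat -> (c < n)%nat ->
  csum n (fun b => Cmul (ip n (col U a) (col U b)) (ip n (col U b) (col U c))) =
  ip n (col U a) (col U c).
Proof.
  intros HU a c Ha Hc. unfold ip, col.
  transitivity (csum n (fun b => csum n (fun i => csum n (fun j =>
     Cmul (Cmul (Cconj (U i a)) (U j c)) (Cmul (U i b) (Cconj (U j b))))))).
  { apply csum_ext; intros b Hb. rewrite csum_mul. apply csum_ext; intros i Hi.
    apply csum_ext; intros j Hj. ring. }
  rewrite csum_swap. apply csum_ext; intros i Hi. rewrite csum_swap.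
  rewrite (csum_ext n _ (fun j => Cmul (delta i j) (Cmul (Cconj (U i a)) (U j c)))).
  - rewrite csum_delta_r; auto.
  - intros j Hj. rewrite csum_scal, unitary_delta by auto. ring.
Qed.

(* U U^* = I implies U^* U = I: P := U^* U is a projection of trace n,
   so I - P is a Hermitian idempotent of trace 0 *)
Lemma unitary_cols n U : unitary n U -> forall a b, (a < n)%nat -> (b < n)%nat ->
  ip n (col U a) (col U b) = delta a b.
Proof.
  intros HU.
  set (P := fun a b => ip n (col U a) (col U b)).
  assert (HP2 : forall a c, (a < n)%nat -> (c < n)%nat ->
            csum n (fun b => Cmul (P a b) (P b c)) = P a c) by (apply col_gram_idempotent; auto).
  set (Q := fun a b => Cadd (delta a b) (Copp (P a b))).
  assert (HQh : herm n Q).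
  { intros a b _ _. unfold Q, P. rewrite <- (ip_conj n (col U a)). unfold delta.
    rewrite Cconj_add, Cconj_opp.
    destruct (Nat.eqb_spec b a), (Nat.eqb_spec a b); try lia; f_equal; apply Cx_eq; simpl; ring. }
  assert (HQ2 : forall a c, (a < n)%nat -> (c < n)%nat ->
            csum n (fun b => Cmul (Q a b) (Q b c)) = Q a c).
  { intros a c Ha Hc. unfold Q.
    rewrite (csum_ext n _ (fun b => Cadd (Cadd (Cadd (Cmul (delta a b) (delta b c))
        (Copp (Cmul (delta a b) (P b c)))) (Copp (Cmul (delta b c) (P a b))))
        (Cmul (P a b) (P b c)))) by (intros; ring).
    rewrite !csum_add, !csum_opp, HP2 by auto.
    rewrite csum_delta_r, csum_delta_r, csum_delta_l by auto. ring. }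
  assert (Htr : csum n (fun a => Q a a) = C0).
  { unfold Q. rewrite csum_add, csum_opp, (csum_ext n _ (fun _ => Cone))
      by (intros; apply delta_refl).
    unfold P, ip, col. rewrite csum_swap.
    rewrite (csum_ext n (fun i => csum n (fun a => Cmul (Cconj (U i a)) (U i a))) (fun _ => Cone)).
    - ring.
    - intros i Hi. transitivity (csum n (fun k => Cmul (U i k) (Cconj (U i k)))).
      apply csum_ext; intros; ring. rewrite unitary_delta, delta_refl by auto; auto. }
  intros a b Ha Hb. pose proof (herm_idempotent_trace0 n Q HQh HQ2 Htr a b Ha Hb) as H0.
  unfold Q in H0. fold (P a b).
  transitivity (Cadd (P a b) (Cadd (delta a b) (Copp (P a b)))). rewrite H0; ring. ring.
Qed.

(* conversely, orthonormal columns make a unitary matrix (apply the above to U^* ) *)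
Lemma cols_unitary n U :
  (forall a b, (a < n)%nat -> (b < n)%nat -> ip n (col U a) (col U b) = delta a b) ->
  unitary n U.
Proof.
  intros H. set (V := fun a i => Cconj (U i a)).
  assert (HV : unitary n V).
  { intros a b Ha Hb. change (if Nat.eqb a b then Cone else C0) with (delta a b).
    rewrite <- (H a b Ha Hb). unfold ip, col, V. apply csum_ext; intros.
    rewrite Cconj_conj; ring. }
  intros i j Hi Hj. pose proof (unitary_cols n V HV i j Hi Hj) as E.
  unfold ip, col, V in E. change (if Nat.eqb i j then Cone else C0) with (delta i j).
  rewrite <- E. apply csum_ext; intros. rewrite Cconj_conj; ring.
Qed.

Lemma unitary_Id n : unitary n Id.
Proof.
  apply cols_unitary. intros a b Ha Hb. unfold col, Id. fold (ev a) (ev b).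
  rewrite ip_ev by auto. unfold ev, delta.
  destruct (Nat.eqb_spec b a), (Nat.eqb_spec a b); try lia; apply Cx_eq; simpl; ring.
Qed.

Lemma unitary_col_norm n U k : unitary n U -> (k < n)%nat -> vnorm2 n (col U k) = 1.
Proof. intros HU Hk. apply RtoC_inj. rewrite vnorm2_ip, unitary_cols, delta_refl; auto. Qed.

Lemma parseval n U v : unitary n U ->
  rsum n (fun k => Cnorm2 (ip n (col U k) v)) = vnorm2 n v.
Proof.
  intros HU. apply RtoC_inj. rewrite rsum_Cnorm2, vnorm2_ip.
  unfold ip, col.
  transitivity (csum n (fun k => csum n (fun i => csum n (fun j =>
     Cmul (Cmul (Cconj (v i)) (v j)) (Cmul (U i k) (Cconj (U j k))))))).
  { apply csum_ext; intros k Hk. rewrite csum_conj, csum_mul. apply csum_ext; intros i Hi.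
    apply csum_ext; intros j Hj. rewrite Cconj_mul, Cconj_conj. ring. }
  rewrite csum_swap. apply csum_ext; intros i Hi. rewrite csum_swap.
  transitivity (csum n (fun j => Cmul (delta i j) (Cmul (Cconj (v i)) (v j)))).
  { apply csum_ext; intros j Hj. rewrite csum_scal, unitary_delta by auto. ring. }
  rewrite csum_delta_r; auto.
Qed.

Lemma overlap_sum_k n U V j : unitary n U -> unitary n V -> (j < n)%nat ->
  rsum n (fun k => Cnorm2 (ip n (col U k) (col V j))) = 1.
Proof. intros HU HV Hj. rewrite parseval by auto. apply unitary_col_norm; auto. Qed.
Lemma overlap_sum_j n U V k : unitary n U -> unitary n V -> (k < n)%nat ->
  rsum n (fun j => Cnorm2 (ip n (col U k) (col V j))) = 1.
Proof.
  intros HU HV Hk. rewrite <- (overlap_sum_k n V U k) by auto. apply rsum_ext; intros.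
  rewrite <- ip_conj, Cnorm2_conj; auto.
Qed.

Lemma trace_unitary n V X : unitary n V -> rsum n (fun j => quad n X (col V j)) = trace n X.
Proof.
  intros HV. unfold quad, trace. rewrite <- !Re_csum. f_equal.
  unfold ip, mv, col.
  transitivity (csum n (fun j => csum n (fun i => csum n (fun k =>
    Cmul (X i k) (Cmul (V k j) (Cconj (V i j))))))).
  { apply csum_ext; intros. apply csum_ext; intros. rewrite <- csum_scal.
    apply csum_ext; intros; ring. }
  rewrite csum_swap. apply csum_ext; intros i Hi. rewrite csum_swap.
  rewrite (csum_ext n _ (fun k => Cmul (delta k i) (X i k))).
  - apply csum_delta_l; auto.
  - intros k Hk. rewrite csum_scal, unitary_delta by auto. ring.
Qed.

Section Decomp.
Variables (n : nat) (M U : Mat) (lam : nat -> R).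
Hypothesis HD : spectral_decomp n M U lam.

Lemma dec_unitary : unitary n U. Proof. apply HD. Qed.
Lemma dec_cols a b : (a < n)%nat -> (b < n)%nat -> ip n (col U a) (col U b) = delta a b.
Proof. apply unitary_cols, dec_unitary. Qed.

Lemma dec_eigen k i : (k < n)%nat -> (i < n)%nat ->
  mv n M (col U k) i = Cmul (RtoC (lam k)) (U i k).
Proof.
  intros Hk Hi. unfold mv, col. destruct HD as [_ HM].
  transitivity (csum n (fun j => csum n (fun k' =>
    Cmul (Cmul (U i k') (RtoC (lam k'))) (Cmul (Cconj (U j k')) (U j k))))).
  { apply csum_ext; intros j Hj. rewrite HM by auto. rewrite <- csum_scal_r.
    apply csum_ext; intros; ring. }
  rewrite csum_swap.
  transitivity (csum n (fun k' => Cmul (delta k' k) (Cmul (U i k') (RtoC (lam k'))))).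
  { apply csum_ext; intros k' Hk'. rewrite csum_scal, <- (dec_cols k' k) by auto.
    unfold ip, col. ring. }
  rewrite csum_delta_l; auto. ring.
Qed.

Lemma dec_quad_col k : (k < n)%nat -> quad n M (col U k) = lam k.
Proof.
  intros Hk. unfold quad.
  transitivity (Re (Cmul (RtoC (lam k)) (ip n (col U k) (col U k)))).
  { f_equal. unfold ip. rewrite <- csum_scal. apply csum_ext; intros i Hi.
    rewrite dec_eigen by auto. unfold col; ring. }
  rewrite dec_cols, delta_refl by auto. simpl; ring.
Qed.

Lemma dec_nonneg k : psd n M -> (k < n)%nat -> 0 <= lam k.
Proof. intros Hp Hk. rewrite <- dec_quad_col by auto. apply Hp. Qed.

Lemma dec_quad v : quad n M v = rsum n (fun k => lam k * Cnorm2 (ip n (col U k) v)).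
Proof.
  unfold quad. destruct HD as [_ HM].
  assert (E : ip n v (mv n M v) = csum n (fun k =>
      Cmul (RtoC (lam k)) (Cmul (Cconj (ip n (col U k) v)) (ip n (col U k) v)))).
  { unfold ip, mv, col.
    transitivity (csum n (fun i => csum n (fun j => csum n (fun k =>
      Cmul (RtoC (lam k)) (Cmul (Cmul (Cconj (v i)) (U i k)) (Cmul (Cconj (U j k)) (v j))))))).
    { apply csum_ext; intros i Hi. rewrite <- csum_scal. apply csum_ext; intros j Hj.
      rewrite HM by auto. rewrite <- csum_scal_r, <- csum_scal. apply csum_ext; intros; ring. }
    rewrite csum_swap_3. apply csum_ext; intros k Hk. rewrite csum_conj, csum_mul.
    rewrite <- csum_scal. apply csum_ext; intros i Hi. rewrite <- csum_scal.
    apply csum_ext; intros j Hj. rewrite Cconj_mul, Cconj_conj. ring. }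
  rewrite E, Re_csum. apply rsum_ext; intros k Hk. rewrite Cnorm2_eq. simpl; ring.
Qed.

Lemma dec_trace : trace n M = rsum n lam.
Proof.
  rewrite <- (trace_unitary n U M dec_unitary). apply rsum_ext; intros. apply dec_quad_col; auto.
Qed.
End Decomp.

Lemma dec_ext n M M' U lam : (forall i j, (i < n)%nat -> (j < n)%nat -> M i j = M' i j) ->
  spectral_decomp n M U lam -> spectral_decomp n M' U lam.
Proof. intros H [HU HM]. split; auto. intros. rewrite <- H by auto. auto. Qed.

Definition ent (x : R) : R := - xlog2x x.
Definition L0 (x : R) : R := if Req_EM_T x 0 then 0 else ln x.
Definition Hs n (f : nat -> R) : R := rsum n (fun k => ent (f k)).

Lemma ln2_pos : 0 < ln 2.
Proof. rewrite <- ln_1. apply ln_increasing; lra. Qed.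
Lemma L0_pos x : 0 < x -> L0 x = ln x.
Proof. intros; unfold L0; destruct (Req_EM_T x 0); lra. Qed.
Lemma L0_0 : L0 0 = 0.
Proof. unfold L0; destruct (Req_EM_T 0 0); lra. Qed.
Lemma ent_L0 x : ent x = - (x * L0 x) / ln 2.
Proof.
  pose proof ln2_pos. unfold ent, xlog2x, L0, log2. destruct (Req_EM_T x 0).
  subst; field; lra. field; lra.
Qed.
Lemma h2_ent p : h2 p = ent p + ent (1 - p).
Proof. unfold h2, ent; ring. Qed.

Lemma ln_le_sub1 t : 0 < t -> ln t <= t - 1.
Proof. intros. pose proof (exp_ineq1_le (ln t)). rewrite exp_ln in H0; lra. Qed.

Lemma ent_nonneg z : 0 <= z <= 1 -> 0 <= ent z.
Proof.
  intros Hz. pose proof ln2_pos. rewrite ent_L0. destruct (Req_dec z 0).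
  - subst. rewrite L0_0. unfold Rdiv; rewrite Rmult_0_l, Ropp_0, Rmult_0_l; lra.
  - rewrite L0_pos by lra. assert (ln z <= 0).
    { destruct (Req_dec z 1). subst; rewrite ln_1; lra.
      left; rewrite <- ln_1; apply ln_increasing; lra. }
    unfold Rdiv. apply Rmult_le_pos; [nra|]. left; apply Rinv_0_lt_compat; auto.
Qed.

Lemma Hs_nonneg n z : (forall j, (j < n)%nat -> 0 <= z j) -> rsum n z = 1 -> 0 <= Hs n z.
Proof.
  intros. apply rsum_nonneg; intros. apply ent_nonneg. split; auto.
  rewrite <- H0. apply (rsum_term_le n z); auto.
Qed.

Lemma ent_mul a b : 0 <= a -> 0 <= b -> ent (a * b) = a * ent b + b * ent a.
Proof.
  intros Ha Hb. pose proof ln2_pos. rewrite !ent_L0.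
  destruct Ha as [Ha|Ha]; [|subst; replace (0 * b) with 0 by ring; rewrite L0_0; field; lra].
  destruct Hb as [Hb|Hb]; [|subst; replace (a * 0) with 0 by ring; rewrite L0_0; field; lra].
  rewrite !L0_pos by nra. rewrite ln_mult by auto. field. lra.
Qed.

(* the tangent-line bound y ln y >= y ln m + y - m, from ln t <= t - 1 *)
Lemma xlnx_tangent m y : 0 < m -> 0 <= y -> y * L0 y >= y * ln m + y - m.
Proof.
  intros Hm Hy. destruct Hy as [Hy|Hy].
  - rewrite L0_pos by auto. pose proof (ln_le_sub1 (m / y) ltac:(apply Rdiv_lt_0_compat; lra)).
    unfold Rdiv in H. rewrite ln_mult, ln_Rinv in H by (try apply Rinv_0_lt_compat; lra).
    assert (y * (ln m + - ln y) <= y * (m * / y - 1)) by (apply Rmult_le_compat_l; lra).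
    replace (y * (m * / y - 1)) with (m - y) in H0 by (field; lra). lra.
  - subst. rewrite L0_0. lra.
Qed.

Lemma ent_concave c x z : 0 <= c <= 1 -> 0 <= x -> 0 <= z ->
  c * ent x + (1 - c) * ent z <= ent (c * x + (1 - c) * z).
Proof.
  intros Hc Hx Hz. pose proof ln2_pos. rewrite !ent_L0.
  set (m := c * x + (1 - c) * z).
  assert (Hm : 0 <= m) by (unfold m; nra).
  unfold Rdiv.
  replace (c * (- (x * L0 x) * / ln 2) + (1 - c) * (- (z * L0 z) * / ln 2))
    with (- (c * (x * L0 x) + (1 - c) * (z * L0 z)) * / ln 2) by ring.
  apply Rmult_le_compat_r; [left; apply Rinv_0_lt_compat; auto|]. apply Ropp_le_contravar.
  destruct Hm as [Hm|Hm].
  - pose proof (xlnx_tangent m x Hm Hx). pose proof (xlnx_tangent m z Hm Hz).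
    rewrite (L0_pos m Hm).
    assert (c * (x * L0 x) >= c * (x * ln m + x - m)) by (apply Rle_ge, Rmult_le_compat_l; lra).
    assert ((1 - c) * (z * L0 z) >= (1 - c) * (z * ln m + z - m))
      by (apply Rle_ge, Rmult_le_compat_l; lra).
    assert (c * (x * ln m + x - m) + (1 - c) * (z * ln m + z - m) = m * ln m) by (unfold m; ring).
    lra.
  - rewrite <- Hm, L0_0.
    assert (c * (x * L0 x) = 0).
    { destruct (Req_dec c 0). subst; ring. assert (x = 0) by (unfold m in Hm; nra). subst; ring. }
    assert ((1 - c) * (z * L0 z) = 0).
    { destruct (Req_dec (1 - c) 0) as [H1c|H1c]. rewrite H1c; ring.
      assert (z = 0) by (unfold m in Hm; nra). subst; ring. }
    lra.
Qed.

Lemma Hs_mix_lower n c x y : 0 < c <= 1 ->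
  (forall j, (j < n)%nat -> 0 <= x j) -> (forall j, (j < n)%nat -> 0 <= y j) ->
  rsum n x = 1 -> rsum n y = 1 - c -> c * Hs n x <= rsum n (fun j => ent (c * x j + y j)).
Proof.
  intros Hc Hx Hy Sx Sy. unfold Hs. rewrite <- rsum_scal.
  destruct (Req_dec c 1).
  - subst. rewrite Rminus_diag in Sy. pose proof (rsum_zero_nonneg n y Hy Sy).
    right. apply rsum_ext; intros. rewrite H by auto. replace (1 * x k + 0) with (x k) by ring. ring.
  - set (z := fun j => y j / (1 - c)).
    assert (Hz : forall j, (j < n)%nat -> 0 <= z j).
    { intros; unfold z, Rdiv; apply Rmult_le_pos; auto; left; apply Rinv_0_lt_compat; lra. }
    assert (Sz : rsum n z = 1).
    { unfold z, Rdiv. rewrite (rsum_ext n _ (fun j => / (1 - c) * y j)) by (intros; ring).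
      rewrite rsum_scal, Sy; field; lra. }
    pose proof (Hs_nonneg n z Hz Sz). unfold Hs in H0.
    apply Rle_trans with (rsum n (fun j => c * ent (x j) + (1 - c) * ent (z j))).
    + rewrite rsum_add, !rsum_scal. assert (0 < 1 - c) by lra. nra.
    + apply rsum_le; intros j Hj.
      replace (c * x j + y j) with (c * x j + (1 - c) * z j) by (unfold z; field; lra).
      apply ent_concave; auto; lra.
Qed.

Lemma gibbs_term T r c : 0 <= T -> T <= r -> T <= c -> T * (L0 c - L0 r) >= T - T * r / c.
Proof.
  intros HT Hr Hc. destruct HT as [HT|HT].
  - unfold L0. destruct (Req_EM_T c 0); [lra|]. destruct (Req_EM_T r 0); [lra|].
    assert (0 < r / c) by (apply Rdiv_lt_0_compat; lra).
    pose proof (ln_le_sub1 _ H). unfold Rdiv in H0.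
    rewrite ln_mult, ln_Rinv in H0 by (try apply Rinv_0_lt_compat; lra).
    assert (T * (r / c - 1) >= T * (ln r - ln c)) by (apply Rle_ge, Rmult_le_compat_l; lra).
    unfold Rdiv in *. nra.
  - subst. lra.
Qed.

(* Gibbs-type comparison of the entropies of the row sums r_k and the column
   sums c_n of a nonnegative array T; the correction term vanishes or is
   nonnegative in all our applications *)
Lemma ent_rows_cols K N (T : nat -> nat -> R) :
  (forall k n, (k < K)%nat -> (n < N)%nat -> 0 <= T k n) ->
  let r := fun k => rsum N (fun n => T k n) in
  let c := fun n => rsum K (fun k => T k n) in
  rsum K (fun k => ent (r k)) >= rsum N (fun n => ent (c n)) +
    rsum K (fun k => rsum N (fun n => T k n - T k n * r k / c n)) / ln 2.
Proof.
  intros HT r c. pose proof ln2_pos.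
  assert (E1 : rsum K (fun k => ent (r k)) =
               - rsum K (fun k => rsum N (fun n => T k n * L0 (r k))) / ln 2).
  { unfold Rdiv. rewrite <- rsum_opp. rewrite Rmult_comm, <- rsum_scal. apply rsum_ext; intros.
    rewrite ent_L0. unfold r at 1. rewrite Rmult_comm, <- rsum_scal.
    rewrite (rsum_ext N (fun k0 => L0 (r k) * T k k0) (fun n => T k n * L0 (r k))) by (intros; ring).
    field; lra. }
  assert (E2 : rsum N (fun n => ent (c n)) =
               - rsum K (fun k => rsum N (fun n => T k n * L0 (c n))) / ln 2).
  { rewrite rsum_swap. unfold Rdiv. rewrite <- rsum_opp. rewrite Rmult_comm, <- rsum_scal.
    apply rsum_ext; intros. rewrite ent_L0. unfold c at 1. rewrite Rmult_comm, <- rsum_scal.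
    rewrite (rsum_ext K (fun k0 => L0 (c k) * T k0 k) (fun n => T n k * L0 (c k))) by (intros; ring).
    field; lra. }
  rewrite E1, E2.
  assert (rsum K (fun k => rsum N (fun n => T k n - T k n * r k / c n)) <=
          rsum K (fun k => rsum N (fun n => T k n * L0 (c n))) -
          rsum K (fun k => rsum N (fun n => T k n * L0 (r k)))).
  { rewrite Rminus_def, <- rsum_opp, <- rsum_add. apply rsum_le; intros k Hk.
    rewrite <- rsum_opp, <- rsum_add. apply rsum_le; intros n Hn.
    assert (T k n <= r k) by (unfold r; apply (rsum_term_le N (fun n => T k n)); auto).
    assert (T k n <= c n) by (unfold c; apply (rsum_term_le K (fun k => T k n)); auto).
    pose proof (gibbs_term (T k n) (r k) (c n) (HT k n Hk Hn) H0 H1). lra. }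
  apply Rle_ge. unfold Rdiv. apply Rmult_le_reg_r with (ln 2); auto.
  rewrite Rmult_plus_distr_r, !Rmult_assoc, !Rinv_l by lra. lra.
Qed.

(** * The von Neumann entropy is well defined *)

(* Proof: Gibbs comparison of the array
   T j k = lam_k |<u_k, v_j>|^2, whose row sums are <v_j, M v_j> and column
   sums are lam_k. *)
Lemma eigen_entropy_min n M U lam V : psd n M -> spectral_decomp n M U lam -> unitary n V ->
  Hs n lam <= rsum n (fun j => ent (quad n M (col V j))).
Proof.
  intros Hp HD HV. pose proof ln2_pos. pose proof (dec_unitary n M U lam HD) as HU.
  set (D := fun j k => Cnorm2 (ip n (col U k) (col V j))).
  set (T := fun j k => lam k * D j k).
  assert (HT : forall j k, (j < n)%nat -> (k < n)%nat -> 0 <= T j k).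
  { intros; unfold T, D. apply Rmult_le_pos. eapply dec_nonneg; eauto. apply Cnorm2_nonneg. }
  assert (Hrow : forall j, (j < n)%nat -> rsum n (fun k => T j k) = quad n M (col V j)).
  { intros. rewrite (dec_quad n M U lam HD). apply rsum_ext; intros; auto. }
  assert (Hcol : forall k, (k < n)%nat -> rsum n (fun j => T j k) = lam k).
  { intros. unfold T, D. rewrite rsum_scal, overlap_sum_j; auto; ring. }
  pose proof (ent_rows_cols n n T HT) as G. simpl in G.
  rewrite (rsum_ext n (fun k => ent (rsum n (fun j => T j k))) (fun k => ent (lam k))) in G
    by (intros; rewrite Hcol; auto).
  rewrite (rsum_ext n (fun k => ent (rsum n (fun k0 => T k k0)))
             (fun j => ent (quad n M (col V j)))) in G by (intros; rewrite Hrow; auto).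
  (* the Gibbs correction term is nonnegative: it dominates
     sum_j sum_k (T j k - D j k <v_j, M v_j>) = 0 *)
  assert (Hcorr : 0 <= rsum n (fun j => rsum n (fun k =>
      T j k - T j k * rsum n (fun k' => T j k') / rsum n (fun j' => T j' k)))).
  { transitivity (rsum n (fun j => rsum n (fun k => T j k + (- quad n M (col V j)) * D j k))).
    - rewrite (rsum_ext n _ (fun _ => 0)). rewrite rsum_0; lra.
      intros j Hj. rewrite rsum_add, rsum_scal, Hrow by auto. unfold D.
      rewrite overlap_sum_k by auto. ring.
    - apply rsum_le; intros j Hj. apply rsum_le; intros k Hk.
      rewrite Hrow, Hcol by auto. unfold T.
      assert (0 <= quad n M (col V j)) by apply Hp.
      assert (0 <= D j k) by apply Cnorm2_nonneg.
      destruct (Req_EM_T (lam k) 0) as [E|E].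
      + rewrite E. unfold Rdiv; rewrite Rinv_0. nra.
      + unfold Rdiv.
        replace (lam k * D j k * quad n M (col V j) * / lam k) with (D j k * quad n M (col V j))
          by (field; auto). lra. }
  assert (0 <= (rsum n (fun j => rsum n (fun k =>
      T j k - T j k * rsum n (fun k' => T j k') / rsum n (fun j' => T j' k)))) / ln 2).
  { unfold Rdiv. apply Rmult_le_pos; auto. left; apply Rinv_0_lt_compat; auto. }
  unfold Hs. lra.
Qed.

(* hence all spectral decompositions of a positive matrix give the same
   eigenvalue entropy, which is therefore the von Neumann entropy *)
Lemma vN_entropy_spectral n M U lam : psd n M -> spectral_decomp n M U lam ->
  vN_entropy n M = Hs n lam.
Proof.
  intros Hp HD. unfold vN_entropy.
  destruct (epsilon_spec (inhabits 0) (fun s => exists U lam,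
      spectral_decomp n M U lam /\ s = - rsum n (fun k => xlog2x (lam k))))
    as [U' [lam' [HD' E]]].
  { exists (- rsum n (fun k => xlog2x (lam k))), U, lam; auto. }
  rewrite E. fold (Hs n lam').
  assert (Hs n lam <= Hs n lam').
  { eapply Rle_trans. apply (eigen_entropy_min n M U lam U'); auto. eapply dec_unitary; eauto.
    unfold Hs; right; apply rsum_ext; intros. erewrite dec_quad_col; eauto. }
  assert (Hs n lam' <= Hs n lam).
  { eapply Rle_trans. apply (eigen_entropy_min n M U' lam' U); auto. eapply dec_unitary; eauto.
    unfold Hs; right; apply rsum_ext; intros. erewrite dec_quad_col; eauto. }
  unfold Hs in *. rewrite <- rsum_opp. apply Rle_antisym; auto.
Qed.

(** * The spectral theorem *)

Definition near_singular n (N : Mat) : Prop :=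
  forall eps, 0 < eps -> exists x, quad n N x < eps * vnorm2 n x.
Definition singular n (N : Mat) : Prop :=
  exists x, 0 < vnorm2 n x /\ forall i, (i < n)%nat -> mv n N x i = C0.

Definition upd (y : nat -> Cx) d s : nat -> Cx := fun i => if Nat.eqb i d then s else y i.
Definition rowb d (N : Mat) (y : nat -> Cx) : Cx := csum d (fun j => Cmul (N d j) (y j)).

Lemma upd_lt y d s i : (i < d)%nat -> upd y d s i = y i.
Proof. intros; unfold upd; destruct (Nat.eqb_spec i d); [lia|auto]. Qed.
Lemma upd_eq y d s : upd y d s d = s.
Proof. unfold upd; rewrite Nat.eqb_refl; auto. Qed.
Lemma upd_self x d i : (i < S d)%nat -> x i = upd x d (x d) i.
Proof. intros Hi. unfold upd. destruct (Nat.eqb_spec i d); subst; auto. Qed.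

Lemma rowb_zero d N : rowb d N (fun _ => C0) = C0.
Proof. unfold rowb. rewrite (csum_ext d _ (fun _ => C0)) by (intros; ring). apply csum_0. Qed.
Lemma rowb_ev d N i : (i < d)%nat -> rowb d N (ev i) = N d i.
Proof.
  intros Hi. unfold rowb, ev. rewrite (csum_ext d _ (fun j => Cmul (delta j i) (N d j))).
  apply csum_delta_l; auto. intros; ring.
Qed.
Lemma rowb_bound d N y :
  Cnorm2 (rowb d N y) <= 2 ^ d * rsum d (fun j => Cnorm2 (N d j)) * vnorm2 d y.
Proof.
  unfold rowb. eapply Rle_trans. apply Cnorm2_csum_le.
  rewrite Rmult_assoc. apply Rmult_le_compat_l. apply pow_le; lra.
  unfold vnorm2. rewrite <- rsum_scal. apply rsum_le; intros j Hj.
  rewrite Cnorm2_mul. apply Rmult_le_compat_r. apply Cnorm2_nonneg.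
  apply (rsum_term_le d (fun j => Cnorm2 (N d j))); auto. intros; apply Cnorm2_nonneg.
Qed.

Lemma vnorm2_upd d y s : vnorm2 (S d) (upd y d s) = vnorm2 d y + Cnorm2 s.
Proof.
  unfold vnorm2. rewrite rsum_S, upd_eq.
  rewrite (rsum_ext d _ (fun i => Cnorm2 (y i))) by (intros; rewrite upd_lt; auto). auto.
Qed.
Lemma mv_upd_lt d N y s i : (i < d)%nat ->
  mv (S d) N (upd y d s) i = Cadd (mv d N y i) (Cmul (N i d) s).
Proof.
  intros Hi. unfold mv. rewrite csum_S, upd_eq. f_equal.
  apply csum_ext; intros. rewrite upd_lt; auto.
Qed.
Lemma mv_upd_last d N y s :
  mv (S d) N (upd y d s) d = Cadd (rowb d N y) (Cmul (N d d) s).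
Proof.
  unfold mv, rowb. rewrite csum_S, upd_eq. f_equal.
  apply csum_ext; intros. rewrite upd_lt; auto.
Qed.

Lemma quad_upd d N y s : herm (S d) N ->
  quad (S d) N (upd y d s) =
  quad d N y + 2 * Re (Cmul (Cconj s) (rowb d N y)) + Re (N d d) * Cnorm2 s.
Proof.
  intros H. unfold quad, ip. rewrite csum_S, upd_eq, mv_upd_last.
  rewrite (csum_ext d _ (fun i => Cadd (Cmul (Cconj (y i)) (mv d N y i))
      (Cmul (Cconj (y i)) (Cmul (N i d) s))))
    by (intros; rewrite upd_lt, mv_upd_lt by auto; ring).
  rewrite csum_add.
  assert (E : csum d (fun i => Cmul (Cconj (y i)) (Cmul (N i d) s)) =
              Cconj (Cmul (Cconj s) (rowb d N y))).
  { unfold rowb. rewrite Cconj_mul, Cconj_conj, csum_conj, <- csum_scal. apply csum_ext; intros.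
    rewrite H by lia. rewrite Cconj_mul. ring. }
  rewrite E, (herm_diag_real (S d) N d H) by lia.
  generalize (csum d (fun i => Cmul (Cconj (y i)) (mv d N y i))) as P.
  generalize (rowb d N y) as B. generalize (Re (N d d)) as r.
  intros r [] []; destruct s; unfold Cnorm2; simpl; ring.
Qed.

Section Bordered.
Variables (d : nat) (N : Mat).
Hypothesis Hh : herm (S d) N.
Hypothesis Hp : psd (S d) N.
Let a := Re (N d d).

Lemma corner_nonneg : 0 <= a.
Proof.
  pose proof (Hp (upd (fun _ => C0) d Cone)). rewrite quad_upd in H by auto.
  rewrite quad_zero, rowb_zero in H. unfold Cnorm2 in H. simpl in H. fold a in H. lra.
Qed.

(* a zero corner forces a zero last row, since s |-> 2 Re(s^* b) + q is unbounded below *)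
Lemma zero_corner_row : a = 0 -> forall y, rowb d N y = C0.
Proof.
  intros Ha0 y. apply Cnorm2_zero. destruct (Cnorm2_nonneg (rowb d N y)) as [Hpos|]; auto.
  set (t := - (quad d N y + 1) / (2 * Cnorm2 (rowb d N y))).
  pose proof (Hp (upd y d (Cmul (RtoC t) (rowb d N y)))). rewrite quad_upd in H by auto.
  fold a in H. rewrite Ha0 in H.
  assert (Re (Cmul (Cconj (Cmul (RtoC t) (rowb d N y))) (rowb d N y)) = t * Cnorm2 (rowb d N y))
    by (unfold Cnorm2; simpl; ring).
  assert (2 * (t * Cnorm2 (rowb d N y)) = - (quad d N y + 1)) by (unfold t; field; lra).
  lra.
Qed.

Lemma zero_corner_singular : a = 0 -> singular (S d) N.
Proof.
  intros Ha0. exists (upd (fun _ => C0) d Cone). split.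
  - rewrite vnorm2_upd. pose proof (vnorm2_nonneg d (fun _ => C0)).
    unfold Cnorm2; simpl. lra.
  - intros i Hi. destruct (Nat.eq_dec i d).
    + subst. rewrite mv_upd_last, rowb_zero, (herm_diag_real (S d) N d Hh) by lia.
      fold a. rewrite Ha0. apply Cx_eq; simpl; ring.
    + rewrite mv_upd_lt by lia. rewrite Hh by lia.
      rewrite <- (rowb_ev d N i), zero_corner_row by (auto; lia).
      unfold mv. rewrite (csum_ext d _ (fun _ => C0)), csum_0, Cconj_C0 by (intros; ring). ring.
Qed.

(* for a > 0, the Schur complement of the corner *)
Definition schur : Mat :=
  fun i j => Cadd (N i j) (Copp (Cmul (Cmul (N i d) (N d j)) (RtoC (/ a)))).

Lemma herm_schur : herm d schur.
Proof.
  intros i j Hi Hj. unfold schur. rewrite Hh, (Hh i d), (Hh d j) by lia.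
  rewrite Cconj_add, Cconj_opp, !Cconj_mul, Cconj_RtoC. ring.
Qed.

Lemma mv_schur y i : (i < d)%nat ->
  mv d schur y i = Cadd (mv d N y i) (Copp (Cmul (Cmul (N i d) (RtoC (/ a))) (rowb d N y))).
Proof.
  intros Hi. unfold mv, schur, rowb.
  rewrite (csum_ext d _ (fun j => Cadd (Cmul (N i j) (y j))
       (Copp (Cmul (Cmul (N i d) (RtoC (/ a))) (Cmul (N d j) (y j)))))) by (intros; ring).
  rewrite csum_add, csum_opp, csum_scal. auto.
Qed.

Lemma quad_schur y : 0 < a -> quad d schur y = quad d N y - Cnorm2 (rowb d N y) / a.
Proof.
  intros Ha. unfold quad.
  rewrite (ip_ext d y (mv d schur y) y (fun i => Cadd (mv d N y i)
     (Copp (Cmul (N i d) (Cmul (RtoC (/ a)) (rowb d N y)))))) by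
    (auto; intros; rewrite mv_schur by auto; ring).
  rewrite ip_add_r, ip_opp_r.
  assert (EB : ip d y (fun i => Cmul (N i d) (Cmul (RtoC (/ a)) (rowb d N y))) =
               Cmul (Cmul (Cconj (rowb d N y)) (rowb d N y)) (RtoC (/ a))).
  { rewrite ip_scal_r. unfold ip, rowb. rewrite csum_conj.
    rewrite (csum_ext d (fun i => Cmul (Cconj (y i)) (N i d))
               (fun k => Cconj (Cmul (N d k) (y k)))).
    ring. intros. rewrite Cconj_mul, (Hh d) by lia. ring. }
  rewrite EB, Cnorm2_eq. simpl. field. lra.
Qed.

(* completing the square in the last coordinate *)
Lemma quad_upd_schur y s : 0 < a ->
  quad (S d) N (upd y d s) =
  quad d schur y + a * Cnorm2 (Cadd s (Cmul (rowb d N y) (RtoC (/ a)))).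
Proof.
  intros Ha. rewrite quad_upd, quad_schur by auto. fold a.
  unfold Cnorm2. simpl. field. lra.
Qed.

Lemma psd_schur : 0 < a -> psd d schur.
Proof.
  intros Ha y. pose proof (Hp (upd y d (Copp (Cmul (rowb d N y) (RtoC (/ a)))))).
  rewrite quad_upd_schur in H by auto.
  replace (Cadd (Copp (Cmul (rowb d N y) (RtoC (/ a)))) (Cmul (rowb d N y) (RtoC (/ a))))
    with C0 in H by ring.
  unfold Cnorm2 in H; simpl in H. lra.
Qed.

(* a null vector y of the Schur complement lifts to the null vector
   (y, - rowb y / a) of N *)
Lemma schur_singular_lift : 0 < a -> singular d schur -> singular (S d) N.
Proof.
  intros Ha [y [Hy1 Hy2]].
  exists (upd y d (Copp (Cmul (rowb d N y) (RtoC (/ a))))). split.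
  - rewrite vnorm2_upd. pose proof (Cnorm2_nonneg (Copp (Cmul (rowb d N y) (RtoC (/ a))))). lra.
  - intros i Hi. destruct (Nat.eq_dec i d).
    + subst i. rewrite mv_upd_last, (herm_diag_real (S d) N d Hh) by lia. fold a.
      apply Cx_eq; simpl; field; lra.
    + pose proof (Hy2 i ltac:(lia)) as E. rewrite mv_schur in E by lia.
      rewrite mv_upd_lt by lia. rewrite <- E. ring.
Qed.

Lemma last_coord_bound y s : 0 < a ->
  Cnorm2 s <= 2 * Cnorm2 (Cadd s (Cmul (rowb d N y) (RtoC (/ a))))
              + 2 * (2 ^ d * rsum d (fun j => Cnorm2 (N d j)) / (a * a)) * vnorm2 d y.
Proof.
  intros Ha. set (w := Cmul (rowb d N y) (RtoC (/ a))).
  replace s with (Cadd (Cadd s w) (Copp w)) at 1 by ring.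
  eapply Rle_trans. apply Cnorm2_add_le.
  replace (Cnorm2 (Copp w)) with (Cnorm2 (rowb d N y) / (a * a))
    by (unfold w, Cnorm2; simpl; field; lra).
  assert (Cnorm2 (rowb d N y) / (a * a) <=
          2 ^ d * rsum d (fun j => Cnorm2 (N d j)) / (a * a) * vnorm2 d y).
  { unfold Rdiv. rewrite (Rmult_assoc (2 ^ d * _)), (Rmult_comm (/ (a * a))), <- Rmult_assoc.
    apply Rmult_le_compat_r; [left; apply Rinv_0_lt_compat; nra | apply rowb_bound]. }
  lra.
Qed.

(* approximate null vectors of N restrict to approximate null vectors of the
   Schur complement: writing x = (y, s) and z = s + rowb y / a, one has
   <x, N x> = <y, S y> + a |z|^2 while |s|^2 <= 2 |z|^2 + 2 B ||y||^2 *)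
Lemma schur_near_singular : 0 < a -> near_singular (S d) N -> near_singular d schur.
Proof.
  intros Ha Hinf eps Heps.
  set (B := 2 ^ d * rsum d (fun j => Cnorm2 (N d j)) / (a * a)).
  assert (HB : 0 <= B).
  { unfold B, Rdiv. apply Rmult_le_pos. apply Rmult_le_pos. apply pow_le; lra.
    apply rsum_nonneg; intros; apply Cnorm2_nonneg. left; apply Rinv_0_lt_compat; nra. }
  set (C1 := 1 + 2 * B).
  set (e' := Rmin (a / 4) (eps / (2 * C1))).
  assert (He'1 : e' <= a / 4) by apply Rmin_l.
  assert (He'2 : e' <= eps / (2 * C1)) by apply Rmin_r.
  assert (He' : 0 < e') by (apply Rmin_pos; [lra|apply Rdiv_lt_0_compat; unfold C1; lra]).
  destruct (Hinf e' He') as [x Hx]. exists x.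
  pose proof (last_coord_bound x (x d) Ha) as Hs. fold B in Hs.
  rewrite (quad_ext _ N x (upd x d (x d))), (vnorm2_ext _ x (upd x d (x d))) in Hx
    by (intros; apply upd_self; auto).
  rewrite quad_upd_schur, vnorm2_upd in Hx by auto.
  pose proof (psd_schur Ha x).
  set (Q := quad d schur x) in *. set (Y := vnorm2 d x) in *.
  set (Z := Cnorm2 (Cadd (x d) (Cmul (rowb d N x) (RtoC (/ a))))) in *.
  assert (HZ : 0 <= Z) by apply Cnorm2_nonneg. assert (HY : 0 <= Y) by apply vnorm2_nonneg.
  (* Q + a Z < e' (Y + |s|^2) <= e' (C1 Y + 2 Z), and 2 e' Z <= a Z / 2 *)
  assert (Htot : Q + a * Z < e' * (C1 * Y + 2 * Z)).
  { unfold C1. assert (e' * Cnorm2 (x d) <= e' * (2 * Z + 2 * B * Y))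
      by (apply Rmult_le_compat_l; lra). nra. }
  assert (e' * C1 <= eps / 2).
  { replace (eps / 2) with (eps / (2 * C1) * C1) by (unfold C1; field; lra).
    apply Rmult_le_compat_r; [unfold C1; lra | exact He'2]. }
  assert (e' * C1 * Y <= eps / 2 * Y) by (apply Rmult_le_compat_r; lra).
  assert (e' * (2 * Z) <= a * Z) by nra.
  assert (Q < e' * C1 * Y) by nra.
  nra.
Qed.
End Bordered.

(* a positive Hermitian matrix with arbitrarily small Rayleigh quotients has a
   null vector; induction on the dimension through the Schur complement *)
Lemma near_singular_singular d : forall N, herm d N -> psd d N ->
  near_singular d N -> singular d N.
Proof.
  induction d as [|d IH]; intros N Hh Hp Hinf.
  - destruct (Hinf 1 ltac:(lra)) as [x Hx]. unfold quad, ip, vnorm2 in Hx; simpl in Hx. lra.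
  - destruct (corner_nonneg d N Hh Hp) as [Ha|Ha].
    + apply (schur_singular_lift d N Hh Ha), IH.
      * apply herm_schur; auto.
      * apply psd_schur; auto.
      * apply schur_near_singular; auto.
    + apply zero_corner_singular; auto.
Qed.

Section Projection.
Variables (n r : nat) (F : nat -> nat -> Cx).
Definition orthonormal : Prop :=
  forall a b, (a < r)%nat -> (b < r)%nat -> ip n (F a) (F b) = delta a b.
Definition Pm : Mat :=
  fun i j => Cadd (delta i j) (Copp (csum r (fun a => Cmul (F a i) (Cconj (F a j))))).
Definition projv (x : nat -> Cx) : nat -> Cx :=
  fun i => Cadd (x i) (Copp (csum r (fun a => Cmul (F a i) (ip n (F a) x)))).

Lemma mv_Pm x i : (i < n)%nat -> mv n Pm x i = projv x i.
Proof.
  intros Hi. unfold mv, Pm, projv.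
  rewrite (csum_ext n _ (fun j => Cadd (Cmul (delta i j) (x j))
      (Copp (csum r (fun a => Cmul (F a i) (Cmul (Cconj (F a j)) (x j))))))).
  - rewrite csum_add, csum_opp, csum_delta_r by auto. f_equal. f_equal.
    rewrite csum_swap. apply csum_ext; intros. unfold ip. rewrite csum_scal; auto.
  - intros. rewrite (csum_ext r (fun a => Cmul (F a i) (Cmul (Cconj (F a k)) (x k)))
        (fun a => Cmul (Cmul (F a i) (Cconj (F a k))) (x k))) by (intros; ring).
    rewrite csum_scal_r. ring.
Qed.

Lemma herm_Pm : herm n Pm.
Proof.
  intros i j Hi Hj. unfold Pm. rewrite Cconj_add, Cconj_opp, csum_conj. f_equal.
  - unfold delta; destruct (Nat.eqb_spec j i), (Nat.eqb_spec i j); try lia;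
      apply Cx_eq; simpl; ring.
  - f_equal. apply csum_ext; intros. rewrite Cconj_mul, Cconj_conj; ring.
Qed.

Lemma projv_ext x y i : (forall k, (k < n)%nat -> x k = y k) -> (i < n)%nat ->
  projv x i = projv y i.
Proof.
  intros. unfold projv. rewrite H by auto. f_equal. f_equal. apply csum_ext; intros.
  f_equal. apply ip_ext; auto.
Qed.

Lemma projv_orth x i : (forall a, (a < r)%nat -> ip n (F a) x = C0) -> projv x i = x i.
Proof.
  intros H. unfold projv. rewrite (csum_ext r _ (fun _ => C0)), csum_0 by (intros; rewrite H; auto; ring).
  ring.
Qed.

Hypothesis HON : orthonormal.

Lemma ip_F_projv a x : (a < r)%nat -> ip n (F a) (projv x) = C0.
Proof.
  intros Ha. unfold projv. rewrite ip_add_r, ip_opp_r, ip_sum_r.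
  rewrite (csum_ext r _ (fun b => Cmul (delta a b) (ip n (F b) x))) by (intros; rewrite HON; auto).
  rewrite csum_delta_r by auto. ring.
Qed.

Lemma proj_norm x : vnorm2 n (projv x) = vnorm2 n x - rsum r (fun a => Cnorm2 (ip n (F a) x)).
Proof.
  apply RtoC_inj. rewrite vnorm2_ip.
  assert (E : ip n (projv x) (projv x) = ip n x (projv x)).
  { rewrite <- (ip_conj n (projv x) (projv x)). unfold projv at 2.
    rewrite ip_add_r, ip_opp_r, ip_sum_r, Cconj_add, Cconj_opp, ip_conj.
    rewrite (csum_ext r _ (fun _ => C0)), csum_0 by (intros; rewrite <- ip_conj, ip_F_projv, Cconj_C0; auto; ring).
    apply Cx_eq; simpl; ring. }
  rewrite E. unfold projv. rewrite ip_add_r, ip_opp_r, ip_sum_r, <- vnorm2_ip.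
  unfold Rminus. rewrite RtoC_add, RtoC_opp, rsum_Cnorm2.
  rewrite (csum_ext r (fun a => Cmul (ip n x (F a)) (ip n (F a) x))
             (fun k => Cmul (Cconj (ip n (F k) x)) (ip n (F k) x))) by (intros; rewrite ip_conj; auto).
  ring.
Qed.

(* if fewer than n orthonormal vectors are given, some basis vector sticks out of their span:
   sum_i ||P e_i||^2 = n - r > 0 *)
Lemma basis_vector_outside : (r < n)%nat ->
  exists i, (i < n)%nat /\ 0 < vnorm2 n (projv (ev i)).
Proof.
  intros Hr. apply rsum_pos_exists. intros; apply vnorm2_nonneg.
  rewrite (rsum_ext n _ (fun i => 1 - rsum r (fun a => Cnorm2 (F a i)))).
  2:{ intros i Hi. rewrite proj_norm, vnorm2_ev by auto. f_equal.
      apply rsum_ext; intros a Ha. rewrite ip_ev, Cnorm2_conj by auto. auto. }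
  unfold Rminus. rewrite rsum_add, rsum_opp, rsum_swap.
  rewrite (rsum_ext r _ (fun _ => 1)).
  2:{ intros a Ha. apply RtoC_inj. fold (vnorm2 n (F a)). rewrite vnorm2_ip, HON, delta_refl; auto. }
  rewrite !rsum_const1. apply lt_INR in Hr. lra.
Qed.

Lemma compression_eigvec A kappa x mu : herm n A -> mu <> 0 ->
  (forall a i, (a < r)%nat -> (i < n)%nat -> mv n A (F a) i = Cmul (RtoC (kappa a)) (F a i)) ->
  (forall i, (i < n)%nat -> mv n (mm n Pm (mm n A Pm)) x i = Cmul (RtoC mu) (x i)) ->
  (forall a, (a < r)%nat -> ip n (F a) x = C0) /\
  (forall i, (i < n)%nat -> mv n A x i = Cmul (RtoC mu) (x i)).
Proof.
  intros HA Hmu HAF Hx.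
  assert (HPAP : forall i, (i < n)%nat -> mv n (mm n Pm (mm n A Pm)) x i = projv (mv n A (projv x)) i).
  { intros i Hi. rewrite mv_mm, mv_Pm by auto. apply projv_ext; auto.
    intros. rewrite mv_mm. apply mv_ext. intros. apply mv_Pm; auto. }
  assert (Horth : forall a, (a < r)%nat -> ip n (F a) x = C0).
  { intros a Ha.
    rewrite (ip_ext n (F a) x (F a) (fun i => Cmul (projv (mv n A (projv x)) i) (RtoC (/ mu)))).
    - rewrite ip_scal_r, ip_F_projv by auto. ring.
    - auto.
    - intros i Hi. rewrite <- HPAP, Hx by auto. apply Cx_eq; simpl; field; auto. }
  split; auto.
  (* A x is orthogonal to F as well, so A x = P A P x = mu x *)
  assert (HAx : forall a, (a < r)%nat -> ip n (F a) (mv n A x) = C0).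
  { intros a Ha. rewrite <- ip_herm by auto.
    rewrite (ip_ext n (mv n A (F a)) x (fun i => Cmul (F a i) (RtoC (kappa a))) x) by
      (auto; intros; rewrite HAF by auto; ring).
    rewrite ip_scal_l, Horth by auto. ring. }
  intros i Hi. rewrite <- Hx, HPAP by auto.
  rewrite <- (projv_orth (mv n A x) i HAx). apply projv_ext; auto.
  intros k Hk. apply mv_ext. intros; symmetry; apply projv_orth; auto.
Qed.
End Projection.

(* the maximum mu of the Rayleigh quotient of a Hermitian matrix which takes a
   positive value is an eigenvalue: mu I - N is positive and near singular *)
Lemma top_eigvec n N : herm n N -> (exists x0, 0 < quad n N x0) ->
  exists x mu, 0 < mu /\ 0 < vnorm2 n x /\
    forall i, (i < n)%nat -> mv n N x i = Cmul (RtoC mu) (x i).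
Proof.
  intros HN [x0 Hx0].
  assert (Hn0 : 0 < vnorm2 n x0).
  { destruct (vnorm2_nonneg n x0) as [H|H]; auto. rewrite quad_zero_vec in Hx0; auto; lra. }
  set (E := fun t => exists x, 0 < vnorm2 n x /\ t = quad n N x / vnorm2 n x).
  assert (HE : forall x, 0 < vnorm2 n x -> E (quad n N x / vnorm2 n x)) by (intros x Hx; exists x; auto).
  destruct (completeness E) as [mu [Hub Hlub]].
  { exists (mat_bound n N). intros t [x [Hx ->]]. pose proof (quad_bound n N x).
    unfold Rdiv. apply Rmult_le_reg_r with (vnorm2 n x); auto.
    rewrite Rmult_assoc, Rinv_l by lra. lra. }
  { exists (quad n N x0 / vnorm2 n x0); auto. }
  assert (Hle : forall x, 0 < vnorm2 n x -> quad n N x <= mu * vnorm2 n x).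
  { intros x Hx. pose proof (Hub _ (HE x Hx)). unfold Rdiv in H.
    apply Rmult_le_compat_r with (r := vnorm2 n x) in H; [|lra].
    rewrite Rmult_assoc, Rinv_l in H by lra. lra. }
  assert (Hmu : 0 < mu) by (pose proof (Hle x0 Hn0); nra).
  set (N1 := comb mu Id (-1) N).
  assert (HqN1 : forall x, quad n N1 x = mu * vnorm2 n x - quad n N x).
  { intros. unfold N1. rewrite quad_comb, quad_Id. ring. }
  destruct (near_singular_singular n N1) as [x [Hx Hker]].
  - apply herm_comb; auto. apply herm_Id.
  - intros x. rewrite HqN1. destruct (vnorm2_nonneg n x) as [Hx|Hx].
    + pose proof (Hle x Hx). lra.
    + rewrite quad_zero_vec by auto. rewrite <- Hx. lra.
  - intros eps Heps. apply NNPP. intros Hne.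
    assert (is_upper_bound E (mu - eps)).
    { intros t [x [Hx ->]]. apply Rnot_lt_le. intros Hlt. apply Hne. exists x. rewrite HqN1.
      unfold Rdiv in Hlt. apply Rmult_lt_compat_r with (r := vnorm2 n x) in Hlt; auto.
      rewrite Rmult_assoc, Rinv_l in Hlt by lra. lra. }
    apply Hlub in H. lra.
  - exists x, mu. repeat split; auto. intros i Hi. pose proof (Hker i Hi) as H.
    unfold N1 in H. rewrite mv_comb, mv_Id in H by auto.
    transitivity (Cadd (mv n N x i) (Cadd (Cmul (RtoC mu) (x i)) (Cmul (RtoC (-1)) (mv n N x i)))).
    + rewrite H. ring.
    + apply Cx_eq; simpl; ring.
Qed.

Lemma quad_compression n r F A x :
  quad n (mm n (Pm r F) (mm n A (Pm r F))) x = quad n A (projv n r F x).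
Proof.
  unfold quad. f_equal.
  transitivity (ip n x (mv n (Pm r F) (mv n A (mv n (Pm r F) x)))).
  { apply ip_ext; auto. intros. rewrite mv_mm. apply mv_ext. intros. apply mv_mm. }
  rewrite <- ip_herm by apply herm_Pm. apply ip_ext.
  - intros; apply mv_Pm; auto.
  - intros. apply mv_ext. intros; apply mv_Pm; auto.
Qed.

(* an orthonormal family of r < n eigenvectors of a Hermitian matrix extends
   by one more eigenvector: take the top eigenvector of the compression to
   the orthogonal complement of M + c I, with c so large that M + c I is
   positive definite *)
Lemma orthogonal_eigvec n M r F lam : herm n M -> orthonormal n r F ->
  (forall a i, (a < r)%nat -> (i < n)%nat -> mv n M (F a) i = Cmul (RtoC (lam a)) (F a i)) ->
  (r < n)%nat ->
  exists v mu, (forall a, (a < r)%nat -> ip n (F a) v = C0) /\ ip n v v = Cone /\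
     (forall i, (i < n)%nat -> mv n M v i = Cmul (RtoC mu) (v i)).
Proof.
  intros HM HON Heig Hr.
  set (c := mat_bound n M + 1).
  set (Mc := comb 1 M c Id).
  assert (HMc : herm n Mc) by (apply herm_comb; auto; apply herm_Id).
  assert (HmvMc : forall x i, (i < n)%nat -> mv n Mc x i = Cadd (mv n M x i) (Cmul (RtoC c) (x i))).
  { intros. unfold Mc. rewrite mv_comb, mv_Id by auto. ring. }
  assert (HposMc : forall x, vnorm2 n x <= quad n Mc x).
  { intros. unfold Mc. rewrite quad_comb, quad_Id. pose proof (quad_bound n M x). unfold c. lra. }
  assert (HFMc : forall a i, (a < r)%nat -> (i < n)%nat ->
            mv n Mc (F a) i = Cmul (RtoC (lam a + c)) (F a i)).
  { intros. rewrite HmvMc, Heig, RtoC_add by auto. ring. }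
  set (N0 := mm n (Pm r F) (mm n Mc (Pm r F))).
  destruct (top_eigvec n N0) as [x [mu [Hmu [Hx HN0x]]]].
  { apply herm_sandwich; auto. apply herm_Pm. }
  { destruct (basis_vector_outside n r F HON Hr) as [i0 [Hi0 Hpos]].
    exists (ev i0). unfold N0. rewrite quad_compression. pose proof (HposMc (projv n r F (ev i0))). lra. }
  destruct (compression_eigvec n r F HON Mc (fun a => lam a + c) x mu HMc ltac:(lra) HFMc HN0x)
    as [Horth HMcx].
  set (sc := / sqrt (vnorm2 n x)).
  assert (Hsq : 0 < sqrt (vnorm2 n x)) by (apply sqrt_lt_R0; auto).
  exists (fun i => Cmul (x i) (RtoC sc)), (mu - c). split; [|split].
  - intros a Ha. rewrite ip_scal_r, Horth by auto. ring.
  - rewrite ip_scal_l, ip_scal_r, <- vnorm2_ip. rewrite Cconj_RtoC, <- !RtoC_mul. f_equal.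
    unfold sc. pattern (vnorm2 n x) at 2. rewrite <- (sqrt_sqrt (vnorm2 n x)) by lra. field. lra.
  - intros i Hi. rewrite mv_scal.
    assert (HMx : mv n M x i = Cmul (RtoC (mu - c)) (x i)).
    { transitivity (Cadd (mv n Mc x i) (Copp (Cmul (RtoC c) (x i)))).
      + rewrite HmvMc by auto. ring.
      + rewrite HMcx by auto. unfold Rminus. rewrite RtoC_add, RtoC_opp. ring. }
    rewrite HMx. ring.
Qed.

(* the spectral theorem: build an orthonormal eigenbasis one vector at a time *)
Lemma spectral_exists n M : herm n M -> exists U lam, spectral_decomp n M U lam.
Proof.
  intros HM.
  assert (Hfam : forall r, (r <= n)%nat -> exists F lam, orthonormal n r F /\
      forall a i, (a < r)%nat -> (i < n)%nat -> mv n M (F a) i = Cmul (RtoC (lam a)) (F a i)).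
  { induction r; intros Hr.
    - exists (fun _ _ => C0), (fun _ => 0). split; [intros a b Ha; lia | intros a i Ha; lia].
    - destruct IHr as [F [lam [HON Heig]]]; [lia|].
      destruct (orthogonal_eigvec n M r F lam HM HON Heig) as [v [mu [Hv1 [Hv2 Hv3]]]]; [lia|].
      exists (fun a => if Nat.eqb a r then v else F a), (fun a => if Nat.eqb a r then mu else lam a).
      split.
      + intros a b Ha Hb. unfold delta.
        destruct (Nat.eqb_spec a r), (Nat.eqb_spec b r); subst.
        * rewrite Nat.eqb_refl; auto.
        * destruct (Nat.eqb_spec r b); [lia|]. rewrite <- ip_conj, Hv1 by lia. apply Cconj_C0.
        * destruct (Nat.eqb_spec a r); [lia|]. apply Hv1; lia.
        * rewrite HON by lia. auto.
      + intros a i Ha Hi. destruct (Nat.eqb_spec a r). apply Hv3; auto. apply Heig; auto; lia. }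
  destruct (Hfam n (le_n n)) as [F [lam [HON Heig]]].
  set (U := fun i k => F k i).
  assert (HU : unitary n U) by (apply cols_unitary; intros a b Ha Hb; apply HON; auto).
  exists U, lam. split; auto.
  intros i j Hi Hj.
  transitivity (csum n (fun k => Cmul (mv n M (F k) i) (Cconj (F k j)))).
  2:{ apply csum_ext; intros. rewrite Heig by auto. unfold U; ring. }
  unfold mv. rewrite (csum_ext n _ (fun k => csum n (fun l => Cmul (M i l) (Cmul (U l k) (Cconj (U j k)))))).
  2:{ intros. rewrite <- csum_scal_r. apply csum_ext; intros. unfold U; ring. }
  rewrite csum_swap, (csum_ext n _ (fun l => Cmul (delta l j) (M i l))).
  - rewrite csum_delta_l; auto.
  - intros l Hl. rewrite csum_scal, unitary_delta by auto. ring.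
Qed.

Lemma vN_ext n M M' : herm n M -> psd n M ->
  (forall i j, (i < n)%nat -> (j < n)%nat -> M i j = M' i j) -> vN_entropy n M = vN_entropy n M'.
Proof.
  intros Hh Hp H. destruct (spectral_exists n M Hh) as [U [lam HD]].
  rewrite (vN_entropy_spectral n M U lam Hp HD). symmetry.
  apply (vN_entropy_spectral n M' U lam). eapply psd_ext; eauto. eapply dec_ext; eauto.
Qed.

(** * Gram matrices: S(A A^* ) = S(A^* A) *)

Definition Adj (A : Mat) : Mat := fun j i => Cconj (A i j).
Definition Trn (X : Mat) : Mat := fun j i => X i j.
Definition Mconj (M : Mat) : Mat := fun i j => Cconj (M i j).
Definition gram (d e : nat) (A : Mat) : Mat :=
  fun i i' => csum e (fun j => Cmul (A i j) (Cconj (A i' j))).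

Lemma quad_gram d e A x :
  quad d (gram d e A) x = rsum e (fun j => Cnorm2 (csum d (fun i => Cmul (Cconj (A i j)) (x i)))).
Proof.
  unfold quad. rewrite <- (Re_RtoC (rsum e _)). f_equal. rewrite rsum_Cnorm2.
  unfold ip, mv, gram.
  transitivity (csum d (fun i => csum d (fun i' => csum e (fun j =>
    Cmul (Cmul (Cconj (x i)) (A i j)) (Cmul (Cconj (A i' j)) (x i')))))).
  { apply csum_ext; intros. rewrite <- csum_scal. apply csum_ext; intros.
    rewrite <- csum_scal_r, <- csum_scal. apply csum_ext; intros; ring. }
  rewrite csum_swap_3. apply csum_ext; intros j Hj. rewrite csum_conj, csum_mul.
  apply csum_ext; intros. apply csum_ext; intros. rewrite Cconj_mul, Cconj_conj. ring.
Qed.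

Lemma psd_gram d e A : psd d (gram d e A).
Proof. intros x. rewrite quad_gram. apply rsum_nonneg; intros; apply Cnorm2_nonneg. Qed.

Lemma herm_gram d e A : herm d (gram d e A).
Proof.
  intros i j Hi Hj. unfold gram. rewrite csum_conj. apply csum_ext; intros.
  rewrite Cconj_mul, Cconj_conj. ring.
Qed.

Lemma trace_gram d e X : trace d (gram d e X) = bnorm2 d e X.
Proof.
  unfold trace, gram, bnorm2. apply rsum_ext; intros. rewrite Re_csum. apply rsum_ext; intros.
  rewrite Cnorm2_eq'. reflexivity.
Qed.

Lemma vN_conj n M : herm n M -> psd n M -> vN_entropy n (Mconj M) = vN_entropy n M.
Proof.
  intros Hh Hp. destruct (spectral_exists n M Hh) as [U [lam [HU HM]]].
  rewrite (vN_entropy_spectral n M U lam Hp) by (split; auto).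
  apply (vN_entropy_spectral n (Mconj M) (Mconj U) lam).
  - intros x. replace (quad n (Mconj M) x) with (quad n M (fun i => Cconj (x i))). apply Hp.
    rewrite !quad_sum. apply rsum_ext; intros. apply rsum_ext; intros. unfold Mconj.
    destruct (x k), (x k0), (M k k0); simpl; ring.
  - split.
    + intros i j Hi Hj. unfold Mconj. change (if Nat.eqb i j then Cone else C0) with (delta i j).
      replace (delta i j) with (Cconj (delta i j))
        by (unfold delta; destruct (Nat.eqb i j); apply Cx_eq; simpl; ring).
      rewrite <- (unitary_delta n U HU i j Hi Hj), csum_conj. apply csum_ext; intros.
      rewrite Cconj_mul; auto.
    + intros i j Hi Hj. unfold Mconj. rewrite HM by auto. rewrite csum_conj. apply csum_ext; intros.
      rewrite !Cconj_mul, Cconj_RtoC. auto.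
Qed.

Section Adjoint.
Variables (d e : nat) (A : Mat) (U : Mat) (lam : nat -> R) (W : Mat) (nu : nat -> R).
Hypothesis HU : spectral_decomp d (gram d e A) U lam.
Hypothesis HW : spectral_decomp e (gram e d (Adj A)) W nu.

Definition img n : nat -> Cx := fun i => csum e (fun j => Cmul (A i j) (W j n)).
Definition coimg k : nat -> Cx := fun j => csum d (fun i => Cmul (Cconj (A i j)) (U i k)).

Lemma ip_img k n : ip d (col U k) (img n) = ip e (coimg k) (col W n).
Proof.
  unfold ip, img, coimg, col.
  rewrite (csum_ext d _ (fun i => csum e (fun j => Cmul (Cmul (Cconj (U i k)) (A i j)) (W j n)))).
  - rewrite csum_swap. apply csum_ext; intros. rewrite csum_conj, <- csum_scal_r.
    apply csum_ext; intros. rewrite Cconj_mul, Cconj_conj. ring.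
  - intros. rewrite <- csum_scal. apply csum_ext; intros; ring.
Qed.

Lemma coimg_norm k : (k < d)%nat -> vnorm2 e (coimg k) = lam k.
Proof. intros. rewrite <- (dec_quad_col d _ U lam HU k) by auto. rewrite quad_gram. reflexivity. Qed.

Lemma img_norm n : (n < e)%nat -> vnorm2 d (img n) = nu n.
Proof.
  intros. rewrite <- (dec_quad_col e _ W nu HW n) by auto. rewrite quad_gram.
  unfold vnorm2, img, Adj, col. apply rsum_ext; intros. f_equal. apply csum_ext; intros.
  rewrite Cconj_conj; auto.
Qed.

Lemma overlap_img_sum_n k : (k < d)%nat ->
  rsum e (fun n => Cnorm2 (ip d (col U k) (img n))) = lam k.
Proof.
  intros. rewrite <- coimg_norm by auto.
  rewrite <- (parseval e W (coimg k)) by (eapply dec_unitary; eauto).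
  apply rsum_ext; intros. rewrite ip_img, <- ip_conj, Cnorm2_conj; auto.
Qed.

Lemma overlap_img_sum_k n : (n < e)%nat ->
  rsum d (fun k => Cnorm2 (ip d (col U k) (img n))) = nu n.
Proof. intros. rewrite <- img_norm by auto. apply parseval. eapply dec_unitary; eauto. Qed.

Lemma img_orthogonal n m : (n < e)%nat -> (m < e)%nat ->
  ip d (img n) (img m) = Cmul (RtoC (nu m)) (delta n m).
Proof.
  intros Hn Hm.
  transitivity (ip e (col W n) (mv e (gram e d (Adj A)) (col W m))).
  - unfold ip, img, mv, gram, Adj, col.
    transitivity (csum d (fun i => csum e (fun j => csum e (fun j' =>
       Cmul (Cmul (Cconj (W j n)) (Cmul (Cconj (A i j)) (A i j'))) (W j' m))))).
    { apply csum_ext; intros. rewrite csum_conj, csum_mul. apply csum_ext; intros.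
      apply csum_ext; intros. rewrite Cconj_mul. ring. }
    rewrite csum_swap. apply csum_ext; intros j Hj. rewrite <- csum_scal, csum_swap.
    apply csum_ext; intros j' Hj'. rewrite <- csum_scal_r, <- csum_scal. apply csum_ext; intros.
    rewrite Cconj_conj. ring.
  - rewrite (ip_ext e (col W n) _ (col W n) (fun i => Cmul (col W m i) (RtoC (nu m)))).
    + rewrite ip_scal_r. erewrite dec_cols; eauto. ring.
    + auto.
    + intros. erewrite dec_eigen; eauto. unfold col; ring.
Qed.

(* Bessel's inequality for u_k against the orthogonal family A w_n *)
Lemma overlap_img_bessel k : (k < d)%nat ->
  rsum e (fun n => Cnorm2 (ip d (col U k) (img n)) * / nu n) <= 1.
Proof.
  intros Hk. set (u := col U k).
  set (s := rsum e (fun n => Cnorm2 (ip d u (img n)) * / nu n)).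
  set (cf := fun n => Cmul (ip d (img n) u) (RtoC (/ nu n))).
  set (z := fun i => csum e (fun n => Cmul (img n i) (cf n))).
  assert (Hu : vnorm2 d u = 1) by (apply unitary_col_norm; auto; eapply dec_unitary; eauto).
  assert (Huz : ip d u z = RtoC s).
  { unfold z. rewrite ip_sum_r. unfold s. rewrite <- csum_RtoC. apply csum_ext; intros. unfold cf.
    rewrite <- (ip_conj d u (img k0)), RtoC_mul, <- Cnorm2_eq'. ring. }
  assert (Hgz : forall n, (n < e)%nat -> ip d (img n) z = Cmul (RtoC (nu n)) (cf n)).
  { intros. unfold z. rewrite ip_sum_r.
    rewrite (csum_ext e _ (fun m => Cmul (delta n m) (Cmul (RtoC (nu m)) (cf m))))
      by (intros; rewrite img_orthogonal by auto; ring).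
    apply csum_delta_r; auto. }
  assert (Hzz : ip d z z = RtoC s).
  { unfold z at 1. rewrite ip_sum_l. unfold s. rewrite <- csum_RtoC. apply csum_ext; intros n Hn.
    rewrite Hgz by auto. unfold cf. rewrite Cconj_mul, Cconj_RtoC, <- (ip_conj d u (img n)).
    rewrite Cconj_conj. destruct (Req_EM_T (nu n) 0) as [E|E].
    - rewrite E, Rinv_0, Rmult_0_r. apply Cx_eq; simpl; ring.
    - rewrite !RtoC_mul, <- Cnorm2_eq.
      assert (Einv : Cmul (RtoC (nu n)) (RtoC (/ nu n)) = Cone) by (rewrite <- RtoC_mul, Rinv_r; auto).
      transitivity (Cmul (Cmul (Cmul (Cconj (ip d u (img n))) (ip d u (img n))) (RtoC (/ nu n)))
                         (Cmul (RtoC (nu n)) (RtoC (/ nu n)))).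
      ring. rewrite Einv; ring. }
  (* 0 <= ||u - z||^2 = 1 - 2 s + s *)
  pose proof (vnorm2_nonneg d (fun i => Cadd (u i) (Copp (z i)))).
  rewrite vnorm2_sub, Hu, Huz in H. simpl in H.
  assert (vnorm2 d z = s) by (apply RtoC_inj; rewrite vnorm2_ip; auto).
  lra.
Qed.

(* Gibbs comparison of the array |<u_k, A w_n>|^2, with correction term
   sum_k lam_k (1 - sum_n |<u_k, A w_n>|^2 / nu_n) >= 0 by Bessel *)
Lemma gram_entropy_le : Hs e nu <= Hs d lam.
Proof.
  pose proof ln2_pos.
  set (T := fun k n => Cnorm2 (ip d (col U k) (img n))).
  assert (HT : forall k n, (k < d)%nat -> (n < e)%nat -> 0 <= T k n) by (intros; apply Cnorm2_nonneg).
  pose proof (ent_rows_cols d e T HT) as G. simpl in G.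
  rewrite (rsum_ext d (fun k => ent (rsum e (fun n => T k n))) (fun k => ent (lam k))) in G
    by (intros; unfold T; rewrite overlap_img_sum_n; auto).
  rewrite (rsum_ext e (fun n => ent (rsum d (fun k => T k n))) (fun n => ent (nu n))) in G
    by (intros; unfold T; rewrite overlap_img_sum_k; auto).
  assert (0 <= rsum d (fun k => rsum e (fun n =>
      T k n - T k n * rsum e (fun n0 => T k n0) / rsum d (fun k0 => T k0 n)))).
  { apply rsum_nonneg; intros k Hk.
    rewrite (rsum_ext e _ (fun n => T k n + (- lam k) * (T k n * / nu n))).
    2:{ intros n Hn. unfold T. rewrite overlap_img_sum_n, overlap_img_sum_k by auto.
        unfold Rdiv; ring. }
    rewrite rsum_add, rsum_scal. unfold T.
    pose proof (overlap_img_sum_n k Hk). pose proof (overlap_img_bessel k Hk).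
    assert (0 <= lam k) by (eapply dec_nonneg; eauto; apply psd_gram).
    nra. }
  unfold Hs. assert (0 <= rsum d (fun k => rsum e (fun n =>
      T k n - T k n * rsum e (fun n0 => T k n0) / rsum d (fun k0 => T k0 n))) / ln 2).
  { unfold Rdiv; apply Rmult_le_pos; auto. left; apply Rinv_0_lt_compat; auto. }
  lra.
Qed.
End Adjoint.

Lemma gram_entropy_adjoint d e A : vN_entropy d (gram d e A) = vN_entropy e (gram e d (Adj A)).
Proof.
  destruct (spectral_exists d (gram d e A) (herm_gram d e A)) as [U [lam HU]].
  destruct (spectral_exists e (gram e d (Adj A)) (herm_gram e d (Adj A))) as [W [nu HW]].
  rewrite (vN_entropy_spectral _ _ U lam (psd_gram d e A) HU),
          (vN_entropy_spectral _ _ W nu (psd_gram e d (Adj A)) HW).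
  apply Rle_antisym.
  - apply (gram_entropy_le e d (Adj A) W nu U lam HW).
    eapply dec_ext; [|exact HU]. intros. unfold gram, Adj. apply csum_ext; intros.
    rewrite !Cconj_conj; auto.
  - apply (gram_entropy_le d e A U lam W nu HU HW).
Qed.

(* Schmidt symmetry: the two reduced states of a bipartite vector have equal entropy *)
Lemma gram_entropy_Trn dA dB X : vN_entropy dA (gram dA dB X) = vN_entropy dB (gram dB dA (Trn X)).
Proof.
  rewrite gram_entropy_adjoint, <- (vN_conj dB (gram dB dA (Adj X)) (herm_gram _ _ _) (psd_gram _ _ _)).
  symmetry. apply vN_ext. apply herm_gram. apply psd_gram.
  intros i j Hi Hj. unfold Mconj, gram, Adj, Trn. rewrite csum_conj. apply csum_ext; intros.
  rewrite !Cconj_mul, !Cconj_conj. ring.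
Qed.

(** * Entropy bounds for mixtures *)

(* S(c X + Y) >= c S(X) for density matrices X and positive Y of trace 1 - c:
   diagonalize R = c X + Y, and compare with X's diagonal in R's eigenbasis *)
Lemma entropy_mixture_lower n R X Y c : herm n X -> psd n X -> psd n Y -> herm n R ->
  (forall i j, (i < n)%nat -> (j < n)%nat -> R i j = Cadd (Cmul (RtoC c) (X i j)) (Y i j)) ->
  0 < c <= 1 -> trace n X = 1 -> trace n Y = 1 - c -> c * vN_entropy n X <= vN_entropy n R.
Proof.
  intros HhX HX HY HhR HR Hc TX TY.
  assert (EQ : forall x, quad n R x = c * quad n X x + quad n Y x).
  { intros x. rewrite (quad_mat_ext n R (comb c X 1 Y) x), quad_comb. ring.
    intros. rewrite HR by auto. unfold comb. ring. }
  assert (HpR : psd n R) by (intros x; rewrite EQ; pose proof (HX x); pose proof (HY x); nra).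
  destruct (spectral_exists n R HhR) as [V [a HV]].
  destruct (spectral_exists n X HhX) as [U [lam HU]].
  rewrite (vN_entropy_spectral n R V a HpR HV), (vN_entropy_spectral n X U lam HX HU).
  assert (HVu : unitary n V) by (eapply dec_unitary; eauto).
  pose proof (eigen_entropy_min n X U lam V HX HU HVu).
  pose proof (Hs_mix_lower n c (fun j => quad n X (col V j)) (fun j => quad n Y (col V j)) Hc
     (fun j _ => HX _) (fun j _ => HY _)
     ltac:(rewrite trace_unitary; auto) ltac:(rewrite trace_unitary; auto)).
  unfold Hs at 2.
  rewrite (rsum_ext n (fun k => ent (a k))
             (fun j => ent (c * quad n X (col V j) + quad n Y (col V j))))
    by (intros; rewrite <- EQ; erewrite dec_quad_col; eauto).
  apply Rle_trans with (c * rsum n (fun j => ent (quad n X (col V j)))); auto.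
  apply Rmult_le_compat_l; lra.
Qed.

Lemma gram_entropy_col_norms d e A :
  vN_entropy d (gram d e A) <= rsum e (fun k => ent (rsum d (fun i => Cnorm2 (A i k)))).
Proof.
  rewrite gram_entropy_adjoint.
  destruct (spectral_exists e (gram e d (Adj A)) (herm_gram _ _ _)) as [Z [nu HZ]].
  rewrite (vN_entropy_spectral _ _ Z nu (psd_gram _ _ _) HZ).
  eapply Rle_trans. apply (eigen_entropy_min e _ Z nu Id (psd_gram _ _ _) HZ (unitary_Id _)).
  right. apply rsum_ext; intros k Hk. f_equal. rewrite quad_gram.
  apply rsum_ext; intros i Hi. f_equal.
  unfold Adj, col, Id. rewrite (csum_ext e _ (fun j => Cmul (delta j k) (A i j))).
  - apply csum_delta_l; auto.
  - intros; rewrite Cconj_conj; ring.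
Qed.

(* concatenating the weighted eigenbases of M1 and M2 gives a square root of
   p M1 + q M2 whose column norms are the weighted eigenvalues *)
Definition concat_root n (p : R) (U : Mat) (lam : nat -> R) (q : R) (W : Mat) (mu : nat -> R) : Mat :=
  fun i k => if Nat.ltb k n then Cmul (RtoC (sqrt (p * lam k))) (U i k)
             else Cmul (RtoC (sqrt (q * mu (k - n)%nat))) (W i (k - n)%nat).

Lemma sqrt_scal_pair s z w : 0 <= s ->
  Cmul (Cmul (RtoC (sqrt s)) z) (Cconj (Cmul (RtoC (sqrt s)) w)) = Cmul (RtoC s) (Cmul z (Cconj w)).
Proof.
  intros Hs. rewrite Cconj_mul, Cconj_RtoC.
  transitivity (Cmul (Cmul (RtoC (sqrt s)) (RtoC (sqrt s))) (Cmul z (Cconj w))); [ring|].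
  rewrite <- RtoC_mul, sqrt_sqrt; auto.
Qed.

Section Concat.
Variables (n : nat) (M1 M2 U W : Mat) (lam mu : nat -> R) (p q : R).
Hypothesis HU : spectral_decomp n M1 U lam.
Hypothesis HW : spectral_decomp n M2 W mu.
Hypothesis Hlam : forall k, (k < n)%nat -> 0 <= lam k.
Hypothesis Hmu : forall k, (k < n)%nat -> 0 <= mu k.
Hypotheses (Hp : 0 <= p) (Hq : 0 <= q).
Let A := concat_root n p U lam q W mu.

Lemma gram_concat_root i j : (i < n)%nat -> (j < n)%nat ->
  gram n (n + n) A i j = Cadd (Cmul (RtoC p) (M1 i j)) (Cmul (RtoC q) (M2 i j)).
Proof.
  intros Hi Hj. unfold gram. rewrite csum_split.
  destruct HU as [_ HU2]. destruct HW as [_ HW2]. rewrite HU2, HW2 by auto.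
  rewrite <- !csum_scal. f_equal; apply csum_ext; intros k Hk; unfold A, concat_root.
  - destruct (Nat.ltb_spec k n); [|lia].
    rewrite sqrt_scal_pair by (apply Rmult_le_pos; auto). rewrite RtoC_mul. ring.
  - destruct (Nat.ltb_spec (n + k) n); [lia|]. replace (n + k - n)%nat with k by lia.
    rewrite sqrt_scal_pair by (apply Rmult_le_pos; auto). rewrite RtoC_mul. ring.
Qed.

Lemma concat_root_col_norm_l k : (k < n)%nat ->
  rsum n (fun i => Cnorm2 (A i k)) = p * lam k.
Proof.
  intros Hk. rewrite (rsum_ext n _ (fun i => (p * lam k) * Cnorm2 (U i k))).
  - rewrite rsum_scal. change (rsum n (fun i => Cnorm2 (U i k))) with (vnorm2 n (col U k)).
    rewrite unitary_col_norm by (auto; eapply dec_unitary; eauto). ring.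
  - intros i Hi. unfold A, concat_root. destruct (Nat.ltb_spec k n); [|lia].
    rewrite Cnorm2_mul, Cnorm2_RtoC, sqrt_sqrt; auto. apply Rmult_le_pos; auto.
Qed.

Lemma concat_root_col_norm_r k : (k < n)%nat ->
  rsum n (fun i => Cnorm2 (A i (n + k)%nat)) = q * mu k.
Proof.
  intros Hk. rewrite (rsum_ext n _ (fun i => (q * mu k) * Cnorm2 (W i k))).
  - rewrite rsum_scal. change (rsum n (fun i => Cnorm2 (W i k))) with (vnorm2 n (col W k)).
    rewrite unitary_col_norm by (auto; eapply dec_unitary; eauto). ring.
  - intros i Hi. unfold A, concat_root. destruct (Nat.ltb_spec (n + k) n); [lia|].
    replace (n + k - n)%nat with k by lia.
    rewrite Cnorm2_mul, Cnorm2_RtoC, sqrt_sqrt; auto. apply Rmult_le_pos; auto.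
Qed.
End Concat.

Lemma entropy_mixture_upper n R M1 M2 p q : herm n M1 -> psd n M1 -> herm n M2 -> psd n M2 ->
  trace n M1 = 1 -> trace n M2 = 1 -> 0 <= p -> 0 <= q -> p + q = 1 ->
  (forall i j, (i < n)%nat -> (j < n)%nat ->
     R i j = Cadd (Cmul (RtoC p) (M1 i j)) (Cmul (RtoC q) (M2 i j))) ->
  vN_entropy n R <= p * vN_entropy n M1 + q * vN_entropy n M2 + h2 p.
Proof.
  intros Hh1 Hp1 Hh2 Hp2 T1 T2 Hp Hq Hpq HR.
  destruct (spectral_exists n M1 Hh1) as [U [lam HU]].
  destruct (spectral_exists n M2 Hh2) as [W [mu HW]].
  rewrite (vN_entropy_spectral n M1 U lam Hp1 HU), (vN_entropy_spectral n M2 W mu Hp2 HW).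
  assert (Hl : forall k, (k < n)%nat -> 0 <= lam k) by (intros; eapply dec_nonneg; eauto).
  assert (Hm : forall k, (k < n)%nat -> 0 <= mu k) by (intros; eapply dec_nonneg; eauto).
  assert (Sl : rsum n lam = 1) by (rewrite <- (dec_trace n M1 U lam HU); auto).
  assert (Sm : rsum n mu = 1) by (rewrite <- (dec_trace n M2 W mu HW); auto).
  set (A := concat_root n p U lam q W mu).
  rewrite <- (vN_ext n (gram n (n + n) A) R (herm_gram _ _ _) (psd_gram _ _ _))
    by (intros; rewrite HR by auto; apply gram_concat_root; auto).
  eapply Rle_trans. apply gram_entropy_col_norms.
  rewrite rsum_split.
  rewrite (rsum_ext n (fun k => ent (rsum n (fun i => Cnorm2 (A i k))))
             (fun k => p * ent (lam k) + lam k * ent p))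
    by (intros; unfold A; rewrite (concat_root_col_norm_l n M1 U W lam mu p q), ent_mul; auto).
  rewrite (rsum_ext n (fun k => ent (rsum n (fun i => Cnorm2 (A i (n + k)%nat))))
             (fun k => q * ent (mu k) + mu k * ent q))
    by (intros; unfold A; rewrite (concat_root_col_norm_r n M2 U W lam mu p q), ent_mul; auto).
  rewrite !rsum_add, !rsum_scal.
  rewrite (rsum_ext n (fun k => lam k * ent p) (fun k => ent p * lam k)) by (intros; ring).
  rewrite (rsum_ext n (fun k => mu k * ent q) (fun k => ent q * mu k)) by (intros; ring).
  rewrite !rsum_scal, Sl, Sm, h2_ent.
  replace (1 - p) with q by lra. unfold Hs. lra.
Qed.

Lemma ptraceB_gram dA dB (chi : BVec) : ptraceB dB chi = gram dA dB chi.
Proof. reflexivity. Qed.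
Lemma bnorm2_nonneg dA dB chi : 0 <= bnorm2 dA dB chi.
Proof. apply rsum_nonneg; intros; apply rsum_nonneg; intros; apply Cnorm2_nonneg. Qed.

Lemma bnorm2_Trn dA dB chi : bnorm2 dB dA (Trn chi) = bnorm2 dA dB chi.
Proof. unfold bnorm2, Trn. apply rsum_swap. Qed.

Lemma bnorm2_pos dA dB chi :
  ~ (forall i j, (i < dA)%nat -> (j < dB)%nat -> chi i j = C0) -> 0 < bnorm2 dA dB chi.
Proof.
  intros H. destruct (bnorm2_nonneg dA dB chi) as [Hpos|H0]; auto. exfalso. apply H.
  intros i j Hi Hj. apply Cnorm2_zero.
  assert (Hrow : forall i, 0 <= rsum dB (fun j => Cnorm2 (chi i j)))
    by (intros; apply rsum_nonneg; intros; apply Cnorm2_nonneg).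
  pose proof (rsum_zero_nonneg dA _ (fun i _ => Hrow i) (eq_sym H0) i Hi).
  apply (rsum_zero_nonneg dB (fun j => Cnorm2 (chi i j))); auto. intros; apply Cnorm2_nonneg.
Qed.

Lemma trace_Mscale n s M : trace n (Mscale s M) = s * trace n M.
Proof. unfold trace, Mscale. rewrite <- rsum_scal. apply rsum_ext; intros. simpl; ring. Qed.

Definition sc (s : R) (X : Mat) : Mat := fun i j => Cmul (RtoC (sqrt s)) (X i j).

Lemma Mscale_gram d e s X i j : 0 <= s -> Mscale s (gram d e X) i j = gram d e (sc s X) i j.
Proof.
  intros Hs. unfold Mscale, gram, sc. rewrite <- csum_scal. apply csum_ext; intros.
  rewrite sqrt_scal_pair; auto.
Qed.

Lemma herm_psd_Mscale_gram d e s X : 0 <= s ->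
  herm d (Mscale s (gram d e X)) /\ psd d (Mscale s (gram d e X)).
Proof.
  intros Hs. split.
  - eapply herm_ext; [|apply (herm_gram d e (sc s X))]. intros; rewrite Mscale_gram; auto.
  - eapply psd_ext; [|apply (psd_gram d e (sc s X))]. intros; rewrite Mscale_gram; auto.
Qed.

Lemma entanglement_Trn dA dB chi : entanglement dA dB chi = entanglement dB dA (Trn chi).
Proof.
  unfold entanglement. rewrite bnorm2_Trn.
  set (s := / bnorm2 dA dB chi).
  destruct (Rle_dec 0 s) as [Hs|Hs].
  - rewrite (ptraceB_gram dA dB), (ptraceB_gram dB dA).
    rewrite (vN_ext dA _ (gram dA dB (sc s chi))), (vN_ext dB _ (gram dB dA (sc s (Trn chi))))
      by (try apply herm_psd_Mscale_gram; auto; intros; apply Mscale_gram; auto).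
    apply gram_entropy_Trn.
  - exfalso. apply Hs. unfold s. destruct (bnorm2_nonneg dA dB chi) as [H|H].
    + left; apply Rinv_0_lt_compat; auto.
    + rewrite <- H, Rinv_0. lra.
Qed.

Lemma entanglement_normalized dA dB chi : bnorm2 dA dB chi = 1 ->
  entanglement dA dB chi = vN_entropy dA (gram dA dB chi).
Proof.
  intros H. unfold entanglement. rewrite H. symmetry. apply vN_ext.
  apply herm_gram. apply psd_gram. intros. unfold Mscale, ptraceB, gram. rewrite Rinv_1. ring.
Qed.

Lemma bcomb_parallelogram a b (psi phi : BVec) i j k l :
  Cadd (Cmul (bcomb a b psi phi i j) (Cconj (bcomb a b psi phi k l)))
       (Cmul (bcomb a (Copp b) psi phi i j) (Cconj (bcomb a (Copp b) psi phi k l))) =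
  Cmul (RtoC 2) (Cadd (Cmul (RtoC (Cnorm2 a)) (Cmul (psi i j) (Cconj (psi k l))))
                      (Cmul (RtoC (Cnorm2 b)) (Cmul (phi i j) (Cconj (phi k l))))).
Proof.
  unfold bcomb. rewrite <- !Cnorm2_eq. rewrite !Cconj_add, !Cconj_mul, Cconj_opp.
  replace (RtoC 2) with (Cadd Cone Cone) by (apply Cx_eq; simpl; ring). ring.
Qed.

Lemma bnorm2_parallelogram dA dB a b psi phi :
  bnorm2 dA dB (bcomb a b psi phi) + bnorm2 dA dB (bcomb a (Copp b) psi phi) =
  2 * Cnorm2 a * bnorm2 dA dB psi + 2 * Cnorm2 b * bnorm2 dA dB phi.
Proof.
  unfold bnorm2. rewrite <- rsum_add, <- !rsum_scal, <- rsum_add. apply rsum_ext; intros.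
  rewrite <- rsum_add, <- !rsum_scal, <- rsum_add. apply rsum_ext; intros.
  apply RtoC_inj. rewrite !RtoC_add, !RtoC_mul, <- !Cnorm2_eq'. rewrite bcomb_parallelogram.
  rewrite <- !Cnorm2_eq'. ring.
Qed.

Lemma reduced_mixture_upper dA dB (psi phi : BVec) p q :
  bnorm2 dA dB psi = 1 -> bnorm2 dA dB phi = 1 -> 0 <= p -> 0 <= q -> p + q = 1 ->
  vN_entropy dA (Madd (Mscale p (ptraceB dB psi)) (Mscale q (ptraceB dB phi))) <=
  p * entanglement dA dB psi + q * entanglement dA dB phi + h2 p.
Proof.
  intros Hpsi Hphi Hp Hq Hpq.
  rewrite !entanglement_normalized by auto.
  apply (entropy_mixture_upper dA _ (gram dA dB psi) (gram dA dB phi));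
    try apply herm_gram; try apply psd_gram; try rewrite trace_gram; auto.
Qed.

(* ||Gamma||^2 E(Gamma) / 2 <= S(rho^A): rho^A is the average of the reduced
   states of Gamma and Gamma', of traces ||Gamma||^2 and 2 - ||Gamma||^2 *)
Lemma superposition_lower dA dB (psi phi : BVec) a b :
  bnorm2 dA dB psi = 1 -> bnorm2 dA dB phi = 1 -> Cnorm2 a + Cnorm2 b = 1 ->
  0 < bnorm2 dA dB (bcomb a b psi phi) ->
  bnorm2 dA dB (bcomb a b psi phi) / 2 * entanglement dA dB (bcomb a b psi phi) <=
  vN_entropy dA (Madd (Mscale (Cnorm2 a) (ptraceB dB psi)) (Mscale (Cnorm2 b) (ptraceB dB phi))).
Proof.
  intros Hpsi Hphi Hab Hg.
  pose proof (bnorm2_parallelogram dA dB a b psi phi) as Epar. rewrite Hpsi, Hphi in Epar.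
  unfold entanglement.
  set (G1 := bcomb a b psi phi) in *. set (G2 := bcomb a (Copp b) psi phi) in *.
  remember (bnorm2 dA dB G1) as g eqn:Eg.
  assert (Hg2 : bnorm2 dA dB G2 = 2 - g) by lra.
  assert (Hle : g <= 2) by (pose proof (bnorm2_nonneg dA dB G2); lra).
  assert (Hig : 0 <= / g) by (left; apply Rinv_0_lt_compat; lra).
  destruct (herm_psd_Mscale_gram dA dB (/ g) G1 Hig) as [Hh1 Hp1].
  destruct (herm_psd_Mscale_gram dA dB (/ 2) G2 ltac:(lra)) as [Hh2 Hp2].
  apply (entropy_mixture_lower dA _ _ (Mscale (/ 2) (gram dA dB G2)) (g / 2)); auto.
  - apply herm_comb; apply herm_gram.
  - intros i j Hi Hj. unfold Madd, Mscale.
    transitivity (Cmul (RtoC (/ 2)) (Cadd (gram dA dB G1 i j) (gram dA dB G2 i j))).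
    + unfold gram, ptraceB, G1, G2. rewrite <- csum_add, <- !csum_scal, <- csum_add.
      apply csum_ext; intros. rewrite bcomb_parallelogram.
      apply Cx_eq; simpl; field.
    + change (ptraceB dB G1 i j) with (gram dA dB G1 i j).
      generalize (gram dA dB G1 i j) (gram dA dB G2 i j).
      intros [] []; apply Cx_eq; simpl; field; lra.
  - lra.
  - rewrite trace_Mscale, trace_gram, <- Eg. field. lra.
  - rewrite trace_Mscale, trace_gram, Hg2. field.
Qed.

Theorem theorem2 (dA dB : nat) (Psi Phi : BVec) (alpha beta : Cx) :
  bnorm2 dA dB Psi = 1 ->
  bnorm2 dA dB Phi = 1 ->
  Cnorm2 alpha + Cnorm2 beta = 1 ->
  ~ (forall i j, (i < dA)%nat -> (j < dB)%nat ->
       bcomb alpha beta Psi Phi i j = C0) ->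
  let Gamma := bcomb alpha beta Psi Phi in
  let rhoA := Madd (Mscale (Cnorm2 alpha) (ptraceB dB Psi))
                   (Mscale (Cnorm2 beta) (ptraceB dB Phi)) in
  let rhoB := Madd (Mscale (Cnorm2 alpha) (ptraceA dA Psi))
                   (Mscale (Cnorm2 beta) (ptraceA dA Phi)) in
  bnorm2 dA dB Gamma * entanglement dA dB Gamma <=
  2 * (Cnorm2 alpha * entanglement dA dB Psi
       + Cnorm2 beta * entanglement dA dB Phi
       + h2 (Cnorm2 alpha)
       - Rabs (vN_entropy dA rhoA - vN_entropy dB rhoB)).
Proof.
  intros HPsi HPhi Hab Hnz Gamma rhoA rhoB.
  pose proof (Cnorm2_nonneg alpha). pose proof (Cnorm2_nonneg beta).
  assert (Hg : 0 < bnorm2 dA dB Gamma) by (apply bnorm2_pos; auto).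
  (* the A side: upper bound by mixing, lower bound by the parallelogram identity *)
  assert (UA : vN_entropy dA rhoA <= Cnorm2 alpha * entanglement dA dB Psi
                 + Cnorm2 beta * entanglement dA dB Phi + h2 (Cnorm2 alpha))
    by (apply reduced_mixture_upper; auto; lra).
  assert (LA : bnorm2 dA dB Gamma / 2 * entanglement dA dB Gamma <= vN_entropy dA rhoA)
    by (apply superposition_lower; auto).
  (* the B side is the A side of the transposed vectors *)
  assert (HPsiT : bnorm2 dB dA (Trn Psi) = 1) by (rewrite bnorm2_Trn; auto).
  assert (HPhiT : bnorm2 dB dA (Trn Phi) = 1) by (rewrite bnorm2_Trn; auto).
  assert (UB : vN_entropy dB rhoB <= Cnorm2 alpha * entanglement dA dB Psi
                 + Cnorm2 beta * entanglement dA dB Phi + h2 (Cnorm2 alpha)).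
  { rewrite (entanglement_Trn dA dB Psi), (entanglement_Trn dA dB Phi).
    apply reduced_mixture_upper; auto; lra. }
  assert (LB : bnorm2 dA dB Gamma / 2 * entanglement dA dB Gamma <= vN_entropy dB rhoB).
  { rewrite entanglement_Trn, <- bnorm2_Trn.
    apply superposition_lower; auto.
    change (0 < bnorm2 dB dA (Trn Gamma)). rewrite bnorm2_Trn; auto. }
  (* min(S_A, S_B) = max(S_A, S_B) - |S_A - S_B| *)
  unfold Rabs. destruct (Rcase_abs (vN_entropy dA rhoA - vN_entropy dB rhoB)); lra.
Qed.
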